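(* Let $\xi\in\mathbb{R}\setminus\{0\}$, let $\epsilon_1,\epsilon_2,\dots$ be i.i.d. standard Cauchy random variables, let $Y_i=\begin{pmatrix}\xi\epsilon_i&-1\\1&0\end{pmatrix}$ and $S_n=Y_n\cdots Y_1$. Then the top Lyapunov exponent $\lambda(\xi)=\lim_{n\to\infty}\frac1n\mathbb{E}[\log\|S_n\|]$ is \[ \lambda(\xi)=\log\Big(\frac{|\xi|+\sqrt{\xi^2+4}}{2}\Big). \]
   Context: A standard Cauchy random variable has density $\frac{1}{\pi(1+x^2)}$ on $\mathbb{R}$; $\mathrm{Cauchy}(x_0,\gamma)$ has density $\frac{1}{\pi\gamma(1+((x-x_0)/\gamma)^2)}$. $\|\cdot\|$ is any matrix norm. *)

From Stdlib Require Import Reals Lra List.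
Import ListNotations.
Open Scope R_scope.

Record mat2 := Mat2 { m11 : R; m12 : R; m21 : R; m22 : R }.

Definition mat2_zero : mat2 := Mat2 0 0 0 0.
Definition mat2_id : mat2 := Mat2 1 0 0 1.
Definition mat2_add (A B : mat2) : mat2 :=
  Mat2 (m11 A + m11 B) (m12 A + m12 B) (m21 A + m21 B) (m22 A + m22 B).
Definition mat2_scale (c : R) (A : mat2) : mat2 :=
  Mat2 (c * m11 A) (c * m12 A) (c * m21 A) (c * m22 A).
Definition mat2_mul (A B : mat2) : mat2 :=
  Mat2 (m11 A * m11 B + m12 A * m21 B) (m11 A * m12 B + m12 A * m22 B)
       (m21 A * m11 B + m22 A * m21 B) (m21 A * m12 B + m22 A * m22 B).

Definition is_matrix_norm (N : mat2 -> R) : Prop :=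
  (forall A, 0 <= N A) /\
  (forall A, N A = 0 -> A = mat2_zero) /\
  (forall c A, N (mat2_scale c A) = Rabs c * N A) /\
  (forall A B, N (mat2_add A B) <= N A + N B) /\
  (forall A B, N (mat2_mul A B) <= N A * N B).

Definition Ymat (xi e : R) : mat2 := Mat2 (xi * e) (-1) 1 0.

(* S_n = Y_n ... Y_1, where the list is [eps_1; ...; eps_n] *)
Definition Sprod (xi : R) (es : list R) : mat2 :=
  fold_left (fun acc e => mat2_mul (Ymat xi e) acc) es mat2_id.

Definition cauchy_density (x : R) : R := / (PI * (1 + x ^ 2)).

Definition improper_int (h : R -> R) (L : R) : Prop :=
  (forall a b, inhabited (Riemann_integrable h a b)) /\
  (forall eps, 0 < eps -> exists M, forall a b (pr : Riemann_integrable h a b),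
      a < - M -> M < b -> Rabs (RiemannInt pr - L) < eps).

(* cauchy_expect n F L : E[F(eps_1,...,eps_n)] = L for eps_i i.i.d. standard
   Cauchy, expressed as an iterated improper integral against the product
   density (eps_1 outermost). *)
Fixpoint cauchy_expect (n : nat) (F : list R -> R) (L : R) : Prop :=
  match n with
  | O => L = F nil
  | S k => exists g : R -> R,
      (forall x, cauchy_expect k (fun xs => F (x :: xs)) (g x)) /\
      improper_int (fun x => g x * cauchy_density x) L
  end.

From Stdlib Require Import Reals Lra Lia List ClassicalEpsilon ZArith.
From Coquelicot Require Import Coquelicot.
Import ListNotations.
Open Scope R_scope.

(* The standard Cauchy law is the harmonic measure of the point [i]
   for the upper half-plane: if [Im (q / p) > 0] then [E ln |p eps + q| = ln |q + i p|].
   Take a complex row vector [(al, be)] and the column vector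
   [v = (1, - i sign(xi) / gamma)], where [gamma = (|xi| + sqrt (xi^2 + 4)) / 2].
   Since [(al, be) Y_n S_(n-1) v] is affine in [eps_n], integrating out [eps_n]
   replaces [Y_n] by [Y(i) = [[i xi, -1], [1, 0]]].  The vector [v] is an
   eigenvector of [Y(i)] for an eigenvalue of modulus [gamma], so by induction
   [E ln |(al, be) S_n v| = n ln gamma + ln |(al, be) v|] exactly, for all [(al, be)]
   satisfying a half-plane condition that [Y(i)] preserves.  As [det S_n = 1], [ln N(S_n)]
   differs from [ln |(1, i sign xi) S_n v|] by a bounded amount, which gives the
   limit.  The expectations of [ln N(S_n)] exist because it grows at most like
   [sum_k sqrt (1 + |eps_k|)] and depends continuously on each [eps_k]. *)

Lemma Rdiv_le_Rdiv a b c d : 0 < b -> 0 < d -> a * d <= c * b -> a / b <= c / d.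
Proof.
  intros Hb Hd H; apply Rle_div_l; auto.
  unfold Rdiv; rewrite Rmult_assoc, (Rmult_comm (/ d)), <- Rmult_assoc.
  apply Rle_div_r; auto.
Qed.

Lemma continuous_of_ex_derive (f : R -> R) x : ex_derive f x -> continuous f x.
Proof. apply (ex_derive_continuous (K := R_AbsRing) (V := R_NormedModule)). Qed.

Lemma ex_RInt_of_continuous (h : R -> R) : (forall x, continuous h x) -> forall a b, ex_RInt h a b.
Proof. intros Hh a b; apply (ex_RInt_continuous (V := R_CompleteNormedModule)); auto. Qed.

Lemma ln_le_sub_1 y : 0 < y -> ln y <= y - 1.
Proof. intros Hy; pose proof (exp_ineq1_le (ln y)) as H; rewrite exp_ln in H; lra. Qed.

Lemma ln_sqr y : 0 < y -> ln (y * y) = 2 * ln y.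
Proof. intros Hy; rewrite ln_mult by auto; ring. Qed.

Lemma ln_1_add_le y : 0 <= y -> ln (1 + y) <= y.
Proof. intros Hy; pose proof (ln_le_sub_1 (1 + y)); lra. Qed.

Lemma is_lim_m_infty_of_opp (F : R -> R) (l : R) :
  is_lim (fun x => F (- x)) p_infty l -> is_lim F m_infty l.
Proof.
  intros HF; apply (is_lim_ext (fun x => F (- - x))); [intros; rewrite Ropp_involutive; auto|].
  apply (is_lim_comp (fun x => F (- x)) Ropp m_infty l p_infty); auto.
  - apply (is_lim_opp id m_infty m_infty), is_lim_id.
  - exists 0; intros; discriminate.
Qed.

Lemma is_lim_p_infty_of_abs_le_inv (F : R -> R) C X :
  (forall x, X < x -> Rabs (F x) <= C / x) -> is_lim F p_infty 0.
Proof.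
  intros HF; apply is_lim_spec; intros eps.
  exists (Rmax (Rmax X 0) (Rabs C / eps)); intros x Hx.
  pose proof (Rmax_l (Rmax X 0) (Rabs C / eps)); pose proof (Rmax_r (Rmax X 0) (Rabs C / eps)).
  pose proof (Rmax_l X 0); pose proof (Rmax_r X 0); pose proof (cond_pos eps).
  rewrite Rminus_0_r; apply Rle_lt_trans with (C / x); [apply HF; lra|].
  apply Rle_lt_trans with (Rabs C / x).
  { apply Rmult_le_compat_r; [left; apply Rinv_0_lt_compat; lra | apply Rle_abs]. }
  apply Rlt_div_l; [lra|].
  apply Rmult_lt_reg_r with (/ eps); [apply Rinv_0_lt_compat; lra|].
  replace (eps * x * / eps) with x by (field; lra); unfold Rdiv in *; lra.
Qed.

(** * Improper integrals over the real line *)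

Definition is_RInt_line (h : R -> R) (L : R) : Prop :=
  (forall a b, ex_RInt h a b) /\
  (forall eps, 0 < eps -> exists M, forall a b, a < - M -> M < b ->
      Rabs (RInt h a b - L) < eps).

Lemma is_RInt_line_improper_int h L : is_RInt_line h L <-> improper_int h L.
Proof.
  split.
  - intros [Hex Hlim]; split.
    + intros a b; constructor; apply ex_RInt_Reals_0, Hex.
    + intros eps Heps; destruct (Hlim eps Heps) as [M HM]; exists M.
      intros a b pr Ha Hb; rewrite <- RInt_Reals; auto.
  - intros [Hex Hlim]; split.
    + intros a b; destruct (Hex a b) as [pr]; apply ex_RInt_Reals_1, pr.
    + intros eps Heps; destruct (Hlim eps Heps) as [M HM]; exists M.
      intros a b Ha Hb; destruct (Hex a b) as [pr].
      rewrite (RInt_Reals _ _ _ pr); auto.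
Qed.

Lemma is_RInt_line_ext h k L :
  (forall x, h x = k x) -> is_RInt_line h L -> is_RInt_line k L.
Proof.
  intros Ehk [Hex Hlim]; split.
  - intros a b; apply ex_RInt_ext with h; auto.
  - intros eps Heps; destruct (Hlim eps Heps) as [M HM]; exists M.
    intros a b Ha Hb; rewrite <- (RInt_ext h); auto.
Qed.

Lemma is_RInt_line_plus h k L K :
  is_RInt_line h L -> is_RInt_line k K -> is_RInt_line (fun x => h x + k x) (L + K).
Proof.
  intros [Hex Hlim] [Kex Klim]; split.
  - intros a b; apply (ex_RInt_plus h k); auto.
  - intros eps Heps.
    destruct (Hlim (eps / 2)) as [M1 HM1]; [lra|].
    destruct (Klim (eps / 2)) as [M2 HM2]; [lra|].
    exists (Rmax M1 M2); intros a b Ha Hb.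
    pose proof (Rmax_l M1 M2); pose proof (Rmax_r M1 M2).
    rewrite (RInt_plus h k) by auto.
    specialize (HM1 a b ltac:(lra) ltac:(lra)); specialize (HM2 a b ltac:(lra) ltac:(lra)).
    apply Rabs_lt_between in HM1; apply Rabs_lt_between in HM2.
    apply Rabs_lt_between; unfold plus; simpl; lra.
Qed.

Lemma is_RInt_line_scal c h L :
  is_RInt_line h L -> is_RInt_line (fun x => c * h x) (c * L).
Proof.
  intros [Hex Hlim]; split.
  - intros a b; apply (ex_RInt_scal h); auto.
  - intros eps Heps.
    destruct (Hlim (eps / (Rabs c + 1))) as [M HM].
    { pose proof (Rabs_pos c); apply Rdiv_lt_0_compat; lra. }
    exists M; intros a b Ha Hb; specialize (HM a b Ha Hb).
    rewrite (RInt_scal h) by auto; unfold scal; simpl; unfold mult; simpl.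
    replace (c * RInt h a b - c * L) with (c * (RInt h a b - L)) by ring.
    rewrite Rabs_mult.
    pose proof (Rabs_pos c); pose proof (Rabs_pos (RInt h a b - L)).
    apply Rle_lt_trans with ((Rabs c + 1) * Rabs (RInt h a b - L)); [nra|].
    replace eps with ((Rabs c + 1) * (eps / (Rabs c + 1))) by (field; lra).
    apply Rmult_lt_compat_l; lra.
Qed.

Lemma is_RInt_line_minus h k L K :
  is_RInt_line h L -> is_RInt_line k K -> is_RInt_line (fun x => h x - k x) (L - K).
Proof.
  intros Hh Hk.
  apply (is_RInt_line_ext (fun x => h x + -1 * k x)); [intros; ring|].
  replace (L - K) with (L + -1 * K) by ring.
  apply is_RInt_line_plus, is_RInt_line_scal; auto.
Qed.

Lemma is_RInt_line_le h k L K :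
  is_RInt_line h L -> is_RInt_line k K -> (forall x, h x <= k x) -> L <= K.
Proof.
  intros [Hex Hlim] [Kex Klim] Hhk.
  destruct (Rle_or_lt L K) as [|HKL]; auto.
  destruct (Hlim ((L - K) / 2)) as [M1 HM1]; [lra|].
  destruct (Klim ((L - K) / 2)) as [M2 HM2]; [lra|].
  set (M := Rabs M1 + Rabs M2 + 1).
  assert (HM : M1 < M /\ M2 < M /\ 0 < M).
  { unfold M; pose proof (Rle_abs M1); pose proof (Rle_abs M2).
    pose proof (Rabs_pos M1); pose proof (Rabs_pos M2); lra. }
  specialize (HM1 (- M) M ltac:(lra) ltac:(lra)).
  specialize (HM2 (- M) M ltac:(lra) ltac:(lra)).
  assert (RInt h (- M) M <= RInt k (- M) M) by (apply RInt_le; auto; lra).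
  apply Rabs_lt_between in HM1; apply Rabs_lt_between in HM2; lra.
Qed.

Lemma is_RInt_line_abs_le h g L G :
  is_RInt_line h L -> is_RInt_line g G -> (forall x, Rabs (h x) <= g x) -> Rabs L <= G.
Proof.
  intros Hh Hg Hhg.
  apply Rabs_le_between; split.
  - replace (- G) with (-1 * G) by ring.
    apply (is_RInt_line_le (fun x => -1 * g x) h); auto.
    + apply is_RInt_line_scal, Hg.
    + intros x; specialize (Hhg x); apply Rabs_le_between in Hhg; lra.
  - apply (is_RInt_line_le h g); auto.
    intros x; specialize (Hhg x); apply Rabs_le_between in Hhg; lra.
Qed.

Lemma RInt_le_subinterval k a b c d :
  (forall u v, ex_RInt k u v) -> (forall x, 0 <= k x) ->
  a <= c -> c <= d -> d <= b -> RInt k c d <= RInt k a b.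
Proof.
  intros Hex Hk Hac Hcd Hdb.
  rewrite <- (RInt_Chasles k a c b), <- (RInt_Chasles k c d b) by auto.
  unfold plus; simpl.
  assert (0 <= RInt k a c) by (apply RInt_ge_0; auto).
  assert (0 <= RInt k d b) by (apply RInt_ge_0; auto).
  lra.
Qed.

Lemma RInt_le_is_RInt_line k K a b :
  is_RInt_line k K -> (forall x, 0 <= k x) -> a <= b -> RInt k a b <= K.
Proof.
  intros [Hex Hlim] Hk Hab.
  destruct (Rle_or_lt (RInt k a b) K) as [|HK]; auto.
  destruct (Hlim (RInt k a b - K)) as [M HM]; [lra|].
  set (m := Rabs M + Rabs a + Rabs b + 1).
  assert (Hm : M < m /\ - m <= a /\ b <= m).
  { unfold m; pose proof (Rle_abs M); pose proof (Rabs_pos M);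
    pose proof (Rle_abs b); pose proof (Rabs_pos a); pose proof (Rabs_pos b);
    pose proof (Rle_abs (- a)); rewrite Rabs_Ropp in *; lra. }
  specialize (HM (- m) m ltac:(lra) ltac:(lra)).
  assert (RInt k a b <= RInt k (- m) m) by (apply RInt_le_subinterval; auto; lra).
  apply Rabs_lt_between in HM; lra.
Qed.

(* By completeness: the limit is the supremum of the [RInt k (- M) M]. *)
Lemma ex_RInt_line_nonneg_bounded k B :
  (forall a b, ex_RInt k a b) -> (forall x, 0 <= k x) ->
  (forall M, 0 <= M -> RInt k (- M) M <= B) -> exists K, is_RInt_line k K.
Proof.
  intros Hex Hk HB.
  set (E := fun y => exists M, 0 <= M /\ y = RInt k (- M) M).
  destruct (completeness E) as [K [Hub Hlub]].
  { exists B; intros y [M [HM ->]]; auto. }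
  { exists (RInt k (- 0) 0), 0; split; auto; lra. }
  exists K; split; auto.
  intros eps Heps.
  assert (exists M, 0 <= M /\ K - eps < RInt k (- M) M) as [M0 [HM0 HK]].
  { apply Classical_Prop.NNPP; intros Hnot.
    assert (Hbound : is_upper_bound E (K - eps)).
    { intros y [M [HM ->]]; apply Rnot_lt_le; intros Hlt; apply Hnot; eauto. }
    specialize (Hlub _ Hbound); lra. }
  exists M0; intros a b Ha Hb.
  set (m := Rmax (- a) b).
  pose proof (Rmax_l (- a) b); pose proof (Rmax_r (- a) b).
  assert (RInt k (- M0) M0 <= RInt k a b) by (apply RInt_le_subinterval; auto; lra).
  assert (RInt k a b <= RInt k (- m) m) by (apply RInt_le_subinterval; auto; unfold m; lra).
  assert (RInt k (- m) m <= K) by (apply Hub; exists m; split; auto; unfold m; lra).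
  apply Rabs_lt_between; lra.
Qed.

Lemma ex_RInt_line_dominated h k K :
  (forall a b, ex_RInt h a b) -> is_RInt_line k K ->
  (forall x, Rabs (h x) <= k x) -> exists L, is_RInt_line h L.
Proof.
  intros Hex Hk Hhk.
  assert (Hk0 : forall x, 0 <= k x).
  { intros x; specialize (Hhk x); pose proof (Rabs_pos (h x)); lra. }
  assert (Hbetween : forall x, - k x <= h x <= k x) by (intros; apply Rabs_le_between; auto).
  assert (Hexk : forall a b, ex_RInt k a b) by apply Hk.
  destruct (ex_RInt_line_nonneg_bounded (fun x => h x + k x) (2 * K)) as [L HL].
  - intros a b; apply (ex_RInt_plus h k); auto.
  - intros x; specialize (Hbetween x); lra.
  - intros M HM.
    apply Rle_trans with (RInt (fun x => 2 * k x) (- M) M).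
    { apply RInt_le; try lra.
      - apply (ex_RInt_plus h k); auto.
      - apply (ex_RInt_scal k); auto.
      - intros x _; specialize (Hbetween x); lra. }
    rewrite (RInt_scal k) by auto; unfold scal; simpl; unfold mult; simpl.
    assert (RInt k (- M) M <= K) by (apply RInt_le_is_RInt_line; auto; lra).
    lra.
  - exists (L - K).
    apply (is_RInt_line_ext (fun x => (h x + k x) - k x)); [intros; ring|].
    apply is_RInt_line_minus; auto.
Qed.

Lemma is_RInt_line_derive (F h : R -> R) (Lm Lp : R) :
  (forall x, is_derive F x (h x)) -> (forall x, continuous h x) ->
  is_lim F m_infty Lm -> is_lim F p_infty Lp -> is_RInt_line h (Lp - Lm).
Proof.
  intros HF Hh Hm Hp.
  assert (HRInt : forall a b, is_RInt h a b (F b - F a))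
    by (intros a b; apply (is_RInt_derive F h); auto).
  split; [intros a b; eexists; apply HRInt|].
  intros eps Heps.
  destruct (Hm (ball Lm (pos_div_2 (mkposreal _ Heps)))) as [M1 HM1]; [apply locally_ball|].
  destruct (Hp (ball Lp (pos_div_2 (mkposreal _ Heps)))) as [M2 HM2]; [apply locally_ball|].
  exists (Rmax (- M1) M2); intros a b Ha Hb.
  pose proof (Rmax_l (- M1) M2); pose proof (Rmax_r (- M1) M2).
  specialize (HM1 a ltac:(lra)); specialize (HM2 b ltac:(lra)).
  rewrite (is_RInt_unique _ _ _ _ (HRInt a b)).
  unfold ball in HM1, HM2; simpl in HM1, HM2.
  unfold AbsRing_ball, abs, minus, plus, opp in HM1, HM2; simpl in HM1, HM2.
  apply Rabs_lt_between in HM1; apply Rabs_lt_between in HM2.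
  apply Rabs_lt_between; lra.
Qed.

Lemma cauchy_density_pos x : 0 < cauchy_density x.
Proof.
  unfold cauchy_density; pose proof PI_RGT_0; pose proof (pow2_ge_0 x).
  apply Rinv_0_lt_compat, Rmult_lt_0_compat; lra.
Qed.

Lemma continuous_cauchy_density x : continuous cauchy_density x.
Proof.
  apply continuous_of_ex_derive; unfold cauchy_density; auto_derive.
  pose proof PI_RGT_0; pose proof (pow2_ge_0 x); simpl in *; nra.
Qed.

Lemma is_lim_atan_p_infty : is_lim atan p_infty (PI / 2).
Proof.
  assert (Hinv : is_lim (fun x => / x) p_infty 0).
  { replace (Finite 0) with (Rbar_inv p_infty) by reflexivity.
    apply is_lim_inv; [apply is_lim_id | discriminate]. }
  apply (is_lim_ext_loc (fun x => PI / 2 - atan (/ x))).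
  { exists 0; intros x Hx; rewrite atan_inv by lra; ring. }
  assert (Hcomp := is_lim_comp_continuous (fun x => / x) (fun y => PI / 2 - atan y) _ _ Hinv).
  simpl in Hcomp; rewrite atan_0, Rminus_0_r in Hcomp; apply Hcomp.
  apply continuous_of_ex_derive; auto_derive; auto.
Qed.

Lemma is_lim_atan_m_infty : is_lim atan m_infty (- (PI / 2)).
Proof.
  apply is_lim_m_infty_of_opp.
  apply (is_lim_ext (fun x => - atan x)); [intros; rewrite atan_opp; auto|].
  apply (is_lim_opp _ _ (PI / 2)), is_lim_atan_p_infty.
Qed.

Lemma is_RInt_line_cauchy_density : is_RInt_line cauchy_density 1.
Proof.
  pose proof PI_RGT_0.
  replace 1 with (/ PI * (PI / 2) - / PI * (- (PI / 2))) by (field; lra).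
  apply (is_RInt_line_derive (fun x => / PI * atan x)).
  - intros x; auto_derive; auto; unfold cauchy_density.
    pose proof (pow2_ge_0 x); field; simpl in *; split; nra.
  - apply continuous_cauchy_density.
  - apply (is_lim_scal_l atan (/ PI) m_infty (- (PI / 2))), is_lim_atan_m_infty.
  - apply (is_lim_scal_l atan (/ PI) p_infty (PI / 2)), is_lim_atan_p_infty.
Qed.

(* [weight] dominates [ln (1 + |x|) / 2], has a finite Cauchy mean, and grows
   slowly enough to give the rate [1 / sqrt t] in [log_potential_near_ln]. *)
Definition weight (x : R) : R := sqrt (1 + Rabs x).

Definition weighted_density (x : R) : R := weight x * cauchy_density x.

Lemma weight_ge_1 x : 1 <= weight x.
Proof.
  unfold weight; rewrite <- sqrt_1 at 1.
  apply sqrt_le_1_alt; pose proof (Rabs_pos x); lra.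
Qed.

Lemma continuous_weight x : continuous weight x.
Proof.
  unfold weight; apply (continuous_comp (fun x => 1 + Rabs x) sqrt).
  - apply (continuous_plus (fun _ => 1) Rabs); [apply continuous_const | apply continuous_Rabs].
  - apply continuity_pt_filterlim, continuity_pt_sqrt; pose proof (Rabs_pos x); lra.
Qed.

Lemma ln_1_abs_le_weight x : ln (1 + Rabs x) <= 2 * weight x.
Proof.
  unfold weight; pose proof (Rabs_pos x).
  assert (Hs : 0 < sqrt (1 + Rabs x)) by (apply sqrt_lt_R0; lra).
  rewrite <- (sqrt_sqrt (1 + Rabs x)) at 1 by lra.
  rewrite ln_sqr by auto; pose proof (ln_le_sub_1 _ Hs); lra.
Qed.

Lemma continuous_weighted_density x : continuous weighted_density x.
Proof.
  apply (continuous_mult weight cauchy_density);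
    [apply continuous_weight | apply continuous_cauchy_density].
Qed.

Lemma weighted_density_nonneg x : 0 <= weighted_density x.
Proof. unfold weighted_density; pose proof (weight_ge_1 x); pose proof (cauchy_density_pos x); nra. Qed.

Lemma RInt_even (f : R -> R) M :
  (forall a b, ex_RInt f a b) -> (forall x, f (- x) = f x) -> RInt f (- M) 0 = RInt f 0 M.
Proof.
  intros Hex Hf.
  assert (Hopp := is_RInt_comp_opp f 0 M _ (RInt_correct f (- 0) (- M) (Hex _ _))).
  apply (is_RInt_ext _ (fun y => - f y)) in Hopp;
    [| intros; unfold opp; simpl; rewrite Hf; reflexivity].
  apply (is_RInt_unique (V := R_CompleteNormedModule)) in Hopp.
  rewrite (RInt_opp f) in Hopp by auto; unfold opp in Hopp; simpl in Hopp.
  rewrite Ropp_0 in Hopp.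
  rewrite <- (opp_RInt_swap f (- M) 0) in Hopp by auto; unfold opp in Hopp; simpl in Hopp.
  lra.
Qed.

(* On [0, +oo), [weighted_density] is bounded by [2 / (PI (1 + x)^(3/2))],
   whose primitive is [- 4 / (PI sqrt (1 + x))]. *)
Lemma RInt_weighted_density_half_le M : 0 <= M -> RInt weighted_density 0 M <= 4 / PI.
Proof.
  intros HM; pose proof PI_RGT_0 as Hpi.
  set (G := fun x => - 4 / (PI * sqrt (1 + x))).
  set (g := fun x => 2 / (PI * ((1 + x) * sqrt (1 + x)))).
  assert (Hsqrt : forall x, 0 <= x -> 0 < sqrt (1 + x) /\ sqrt (1 + x) * sqrt (1 + x) = 1 + x)
    by (intros x Hx; split; [apply sqrt_lt_R0 | apply sqrt_sqrt]; lra).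
  assert (HG : is_RInt g 0 M (G M - G 0)).
  { apply (is_RInt_derive G g); rewrite Rmin_left, Rmax_right by lra;
      intros x Hx; destruct (Hsqrt x ltac:(lra)) as [Hs Hss].
    - unfold G, g; auto_derive.
      + repeat split; try lra; apply Rgt_not_eq, Rmult_lt_0_compat; auto.
      + set (s := sqrt (1 + x)) in *; rewrite <- Hss; field; lra.
    - apply continuous_of_ex_derive; unfold g; auto_derive.
      repeat split; try lra; apply Rgt_not_eq, Rmult_lt_0_compat; [lra | apply Rmult_lt_0_compat; lra]. }
  assert (Hle : RInt weighted_density 0 M <= RInt g 0 M).
  { apply RInt_le; auto.
    - apply ex_RInt_of_continuous, continuous_weighted_density.
    - eexists; eauto.
    - intros x Hx; destruct (Hsqrt x ltac:(lra)) as [Hs Hss].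
      unfold weighted_density, weight, cauchy_density, g; rewrite Rabs_pos_eq by lra.
      set (s := sqrt (1 + x)) in *; rewrite <- Rdiv_1_l, Rmult_div_assoc, Rmult_1_r.
      apply Rdiv_le_Rdiv; [nra | apply Rmult_lt_0_compat; [lra | apply Rmult_lt_0_compat; lra] |].
      replace (s * (PI * ((1 + x) * s))) with (PI * (1 + x) * (s * s)) by ring.
      rewrite Hss; assert (0 <= PI * (1 - x) ^ 2) by (apply Rmult_le_pos; [lra | apply pow2_ge_0]); nra. }
  rewrite (is_RInt_unique _ _ _ _ HG) in Hle; unfold G in Hle.
  rewrite Rplus_0_r, sqrt_1, Rmult_1_r in Hle.
  destruct (Hsqrt M HM) as [Hs _].
  assert (0 < 4 / (PI * sqrt (1 + M))) by (apply Rdiv_lt_0_compat; [lra | nra]).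
  unfold Rdiv in *; lra.
Qed.

Lemma ex_RInt_line_weighted_density : exists C, is_RInt_line weighted_density C.
Proof.
  assert (Hex := ex_RInt_of_continuous _ continuous_weighted_density).
  apply (ex_RInt_line_nonneg_bounded _ (8 / PI)); auto.
  - apply weighted_density_nonneg.
  - intros M HM.
    assert (Heven : forall x, weighted_density (- x) = weighted_density x).
    { intros x; unfold weighted_density, weight, cauchy_density.
      rewrite Rabs_Ropp; do 3 f_equal; ring. }
    rewrite <- (RInt_Chasles _ (- M) 0 M), RInt_even by auto.
    pose proof (RInt_weighted_density_half_le M HM); unfold plus; simpl; lra.
Qed.

Definition weight_mean : R := epsilon (inhabits 0) (is_RInt_line weighted_density).

Lemma is_RInt_line_weight_mean : is_RInt_line weighted_density weight_mean.
Proof. unfold weight_mean; apply epsilon_spec, ex_RInt_line_weighted_density. Qed.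

(** * Differentiation under the integral sign *)

Lemma continuity_pt_of_is_derive (u : R -> R) du s : is_derive u s du -> continuity_pt u s.
Proof. intros H; apply continuity_pt_filterlim, continuous_of_ex_derive; exists du; auto. Qed.

(* Two applications of the mean value theorem. *)
Lemma taylor_remainder_le (u u1 u2 : R -> R) t0 c t h :
  (forall s, t0 < s -> is_derive u s (u1 s)) ->
  (forall s, t0 < s -> is_derive u1 s (u2 s)) ->
  (forall s, t0 < s -> Rabs (u2 s) <= c) -> t0 < t -> t0 < t + h ->
  Rabs (u (t + h) - u t - h * u1 t) <= h * h * c.
Proof.
  intros Hu Hu1 Hu2 Ht Hth.
  assert (Hin : forall x, Rmin t (t + h) <= x -> t0 < x).
  { intros x Hx; apply Rlt_le_trans with (Rmin t (t + h)); auto.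
    unfold Rmin; destruct Rle_dec; lra. }
  destruct (MVT_gen (fun s => u s - s * u1 t) t (t + h) (fun s => u1 s - u1 t))
    as [c1 [Hc1 E1]].
  { intros x Hx; apply (is_derive_minus u (fun s => s * u1 t)); [apply Hu, Hin; lra|].
    auto_derive; auto; ring. }
  { intros x Hx; apply continuity_pt_minus.
    - apply continuity_pt_of_is_derive with (u1 x), Hu, Hin; lra.
    - apply continuity_pt_mult; [apply derivable_continuous_pt, derivable_pt_id |].
      apply continuity_pt_const; intros a b; auto. }
  destruct (MVT_gen u1 t c1 u2) as [c2 [Hc2 E2]].
  { intros x Hx; apply Hu1, Hin; unfold Rmin, Rmax in *;
      destruct Rle_dec; destruct Rle_dec; lra. }
  { intros x Hx; apply continuity_pt_of_is_derive with (u2 x), Hu1, Hin;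
      unfold Rmin, Rmax in *; destruct Rle_dec; destruct Rle_dec; lra. }
  replace (u (t + h) - u t - h * u1 t)
    with ((u (t + h) - (t + h) * u1 t) - (u t - t * u1 t)) by ring.
  rewrite E1, E2; replace (t + h - t) with h by ring.
  assert (Hc1t : Rabs (c1 - t) <= Rabs h) by (unfold Rmin, Rmax in *; destruct Rle_dec; split_Rabs; lra).
  assert (Hc2' : Rabs (u2 c2) <= c).
  { apply Hu2, Hin; unfold Rmin, Rmax in *; destruct Rle_dec; destruct Rle_dec; lra. }
  rewrite !Rabs_mult.
  replace (h * h * c) with (Rabs h * Rabs h * c) by (rewrite <- Rabs_mult, Rabs_pos_eq; nra).
  pose proof (Rabs_pos (u2 c2)); pose proof (Rabs_pos (c1 - t)); pose proof (Rabs_pos h).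
  assert (Rabs (u2 c2) * Rabs (c1 - t) <= c * Rabs h) by (apply Rmult_le_compat; auto).
  nra.
Qed.

Section DerivUnderIntegral.

Variables (f f1 f2 : R -> R -> R) (Phi Psi g : R -> R) (G t0 : R).
Hypothesis Hf : forall t x, t0 < t -> is_derive (fun s => f s x) t (f1 t x).
Hypothesis Hf1 : forall t x, t0 < t -> is_derive (fun s => f1 s x) t (f2 t x).
Hypothesis Hf2 : forall t x, t0 < t -> Rabs (f2 t x) <= g x.
Hypothesis Hg : is_RInt_line g G.
Hypothesis HPhi : forall t, t0 < t -> is_RInt_line (f t) (Phi t).
Hypothesis HPsi : forall t, t0 < t -> is_RInt_line (f1 t) (Psi t).

Lemma RInt_line_taylor_remainder_le t h : t0 < t -> t0 < t + h ->
  Rabs (Phi (t + h) - Phi t - h * Psi t) <= h * h * G.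
Proof.
  intros Ht Hth.
  apply (is_RInt_line_abs_le (fun x => f (t + h) x - f t x - h * f1 t x) (fun x => h * h * g x)).
  - apply is_RInt_line_minus; [apply is_RInt_line_minus |]; auto.
    apply is_RInt_line_scal; auto.
  - apply is_RInt_line_scal, Hg.
  - intros x; apply (taylor_remainder_le (fun s => f s x) (fun s => f1 s x) (fun s => f2 s x) t0); auto.
Qed.

Lemma is_derive_RInt_line t : t0 < t -> is_derive Phi t (Psi t).
Proof.
  intros Ht; apply is_derive_Reals; intros eps Heps.
  set (K := Rabs G + 1).
  assert (HK : 0 < K) by (unfold K; pose proof (Rabs_pos G); lra).
  assert (Hd : 0 < Rmin (t - t0) (eps / K)) by (apply Rmin_pos; [lra | apply Rdiv_lt_0_compat; lra]).
  exists (mkposreal _ Hd); intros h Hh0 Hh; simpl in Hh.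
  pose proof (Rmin_l (t - t0) (eps / K)); pose proof (Rmin_r (t - t0) (eps / K)).
  assert (Hrem := RInt_line_taylor_remainder_le t h Ht ltac:(split_Rabs; lra)).
  assert (Hhpos : 0 < Rabs h) by (apply Rabs_pos_lt; auto).
  replace ((Phi (t + h) - Phi t) / h - Psi t) with ((Phi (t + h) - Phi t - h * Psi t) / h)
    by (field; auto).
  unfold Rdiv; rewrite Rabs_mult, Rabs_inv.
  apply Rle_lt_trans with (Rabs h * K).
  - apply Rmult_le_reg_r with (Rabs h); auto.
    rewrite Rmult_assoc, Rinv_l by lra.
    replace (h * h * G) with (Rabs h * Rabs h * G) in Hrem
      by (rewrite <- Rabs_mult, Rabs_pos_eq; nra).
    pose proof (Rle_abs G); unfold K; nra.
  - replace eps with (eps / K * K) by (field; lra).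
    apply Rmult_lt_compat_r; lra.
Qed.

End DerivUnderIntegral.

(** * The logarithmic potential of the Cauchy law *)

Definition log_integrand a t x := / 2 * ln ((x + a) ^ 2 + t ^ 2) * cauchy_density x.
Definition log_integrand_dt a t x := t / ((x + a) ^ 2 + t ^ 2) * cauchy_density x.
Definition log_integrand_dt2 a t x :=
  ((x + a) ^ 2 - t ^ 2) / ((x + a) ^ 2 + t ^ 2) ^ 2 * cauchy_density x.

Definition log_potential_closed a t := / 2 * ln (a ^ 2 + (t + 1) ^ 2).
Definition log_potential_dt a t := (t + 1) / (a ^ 2 + (t + 1) ^ 2).

Lemma sum_sqr_pos u t : 0 < t -> 0 < u ^ 2 + t ^ 2.
Proof. intros Ht; pose proof (pow2_ge_0 u); assert (0 < t ^ 2) by (apply pow_lt; lra); lra. Qed.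

Lemma continuous_log_integrand a t x : 0 < t -> continuous (log_integrand a t) x.
Proof.
  intros Ht; apply (continuous_mult (fun x => / 2 * ln ((x + a) ^ 2 + t ^ 2)) cauchy_density);
    [| apply continuous_cauchy_density].
  apply continuous_of_ex_derive; auto_derive; apply sum_sqr_pos; auto.
Qed.

Lemma continuous_log_integrand_dt a t x : 0 < t -> continuous (log_integrand_dt a t) x.
Proof.
  intros Ht; apply (continuous_mult (fun x => t / ((x + a) ^ 2 + t ^ 2)) cauchy_density);
    [| apply continuous_cauchy_density].
  apply continuous_of_ex_derive; auto_derive; apply Rgt_not_eq, sum_sqr_pos; auto.
Qed.

Lemma log_integrand_abs_le a t x : 0 < t ->
  Rabs (log_integrand a t x) <= (Rabs (ln t) + Rabs (ln (1 + Rabs a + t)) + 2) * weighted_density x.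
Proof.
  intros Ht; unfold log_integrand, weighted_density.
  pose proof (cauchy_density_pos x); pose proof (weight_ge_1 x).
  rewrite Rabs_mult, (Rabs_pos_eq (cauchy_density x)), <- Rmult_assoc by lra.
  apply Rmult_le_compat_r; [lra|].
  pose proof (Rabs_pos a); pose proof (Rabs_pos x); pose proof (sum_sqr_pos (x + a) t Ht).
  assert (Hup : ln ((x + a) ^ 2 + t ^ 2) <= 2 * ln (1 + Rabs a + t) + 2 * ln (1 + Rabs x)).
  { rewrite <- !ln_sqr, <- ln_mult by nra; apply ln_le; auto.
    assert ((x + a) ^ 2 <= (Rabs x + Rabs a) ^ 2).
    { rewrite <- (pow2_abs (x + a)); apply pow_incr; split; [apply Rabs_pos | apply Rabs_triang]. }
    assert (0 <= Rabs x * Rabs a * t) by (apply Rmult_le_pos; nra).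
    simpl in *; nra. }
  assert (Hlow : 2 * ln t <= ln ((x + a) ^ 2 + t ^ 2)).
  { rewrite <- ln_sqr by lra; apply ln_le; [nra|]; pose proof (pow2_ge_0 (x + a)); simpl in *; lra. }
  pose proof (ln_1_abs_le_weight x).
  pose proof (Rabs_pos (ln t)); pose proof (Rabs_pos (ln (1 + Rabs a + t))).
  apply Rle_trans with (Rabs (ln t) + Rabs (ln (1 + Rabs a + t)) + 2 * weight x); [|nra].
  apply Rabs_le_between; split_Rabs; lra.
Qed.

Definition log_potential a t : R := epsilon (inhabits 0) (is_RInt_line (log_integrand a t)).

Lemma is_RInt_line_log_potential a t : 0 < t -> is_RInt_line (log_integrand a t) (log_potential a t).
Proof.
  intros Ht; unfold log_potential; apply epsilon_spec.
  set (c := Rabs (ln t) + Rabs (ln (1 + Rabs a + t)) + 2).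
  apply (ex_RInt_line_dominated _ (fun x => c * weighted_density x) (c * weight_mean)).
  - apply ex_RInt_of_continuous; intros; apply continuous_log_integrand; auto.
  - apply is_RInt_line_scal, is_RInt_line_weight_mean.
  - intros; apply log_integrand_abs_le; auto.
Qed.

Lemma ln_div_abs_le u v m : 0 < m -> m <= u -> m <= v -> Rabs (ln (u / v)) <= Rabs (u - v) / m.
Proof.
  intros Hm Hu Hv.
  assert (Hup : ln (u / v) <= (u - v) / v).
  { pose proof (ln_le_sub_1 (u / v) ltac:(apply Rdiv_lt_0_compat; lra)).
    replace ((u - v) / v) with (u / v - 1) by (field; lra); auto. }
  assert (Hlow : (u - v) / u <= ln (u / v)).
  { replace (u / v) with (/ (v / u)) by (field; lra).
    rewrite ln_Rinv by (apply Rdiv_lt_0_compat; lra).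
    pose proof (ln_le_sub_1 (v / u) ltac:(apply Rdiv_lt_0_compat; lra)).
    replace ((u - v) / u) with (- (v / u - 1)) by (field; lra); lra. }
  pose proof (Rabs_pos (u - v)).
  assert (Rabs (u - v) / v <= Rabs (u - v) / m) by (apply Rdiv_le_Rdiv; nra).
  assert (Rabs (u - v) / u <= Rabs (u - v) / m) by (apply Rdiv_le_Rdiv; nra).
  assert ((u - v) / v <= Rabs (u - v) / v)
    by (apply Rmult_le_compat_r; [left; apply Rinv_0_lt_compat; lra | apply Rle_abs]).
  assert (- (Rabs (u - v) / u) <= (u - v) / u).
  { unfold Rdiv; rewrite Ropp_mult_distr_l.
    apply Rmult_le_compat_r; [left; apply Rinv_0_lt_compat; lra|].
    pose proof (Rle_abs (- (u - v))); rewrite Rabs_Ropp in *; lra. }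
  apply Rabs_le_between; lra.
Qed.

Definition log_ratio a t x := ln ((1 + x ^ 2) / ((x + a) ^ 2 + t ^ 2)).

Lemma log_ratio_abs_le a t x : 0 < t -> 2 * Rabs a + 1 < Rabs x ->
  Rabs (log_ratio a t x) <= 4 * (1 + a ^ 2 + t ^ 2 + 2 * Rabs a) / Rabs x.
Proof.
  intros Ht Hx; unfold log_ratio; pose proof (Rabs_pos a).
  assert (Ex : x ^ 2 = Rabs x ^ 2) by (rewrite pow2_abs; auto).
  assert (Hxa : (Rabs x / 2) ^ 2 <= (x + a) ^ 2).
  { rewrite <- (pow2_abs (x + a)); apply pow_incr; split; [lra|].
    pose proof (Rabs_triang_inv x (- a)) as Htri.
    rewrite Rabs_Ropp in Htri; replace (x - - a) with (x + a) in Htri by ring; lra. }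
  assert (0 < t ^ 2) by (apply pow_lt; lra).
  eapply Rle_trans; [apply (ln_div_abs_le _ _ ((Rabs x / 2) ^ 2)); try (apply pow_lt; lra);
                      [rewrite Ex; simpl; nra | lra] |].
  replace (1 + x ^ 2 - ((x + a) ^ 2 + t ^ 2)) with (1 - 2 * a * x - a ^ 2 - t ^ 2) by ring.
  assert (Hax : Rabs (2 * a * x) <= 2 * Rabs a * Rabs x)
    by (rewrite !Rabs_mult, (Rabs_pos_eq 2); lra).
  apply Rabs_le_between in Hax; pose proof (pow2_ge_0 a); pose proof (pow2_ge_0 t).
  apply Rle_trans with ((1 + a ^ 2 + t ^ 2 + 2 * Rabs a * Rabs x) / (Rabs x / 2) ^ 2).
  - apply Rmult_le_compat_r; [left; apply Rinv_0_lt_compat, pow_lt; lra|].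
    apply Rabs_le_between; lra.
  - apply Rdiv_le_Rdiv; [apply pow_lt; lra | lra|].
    assert (0 <= (1 + a ^ 2 + t ^ 2) * (Rabs x * Rabs x - Rabs x)) by (apply Rmult_le_pos; nra).
    simpl; nra.
Qed.

Lemma is_lim_log_ratio_p_infty a t : 0 < t -> is_lim (log_ratio a t) p_infty 0.
Proof.
  intros Ht; pose proof (Rabs_pos a).
  apply (is_lim_p_infty_of_abs_le_inv _ (4 * (1 + a ^ 2 + t ^ 2 + 2 * Rabs a)) (2 * Rabs a + 1)).
  intros x Hx; rewrite <- (Rabs_pos_eq x) at 2 by lra.
  apply log_ratio_abs_le; auto; rewrite (Rabs_pos_eq x); lra.
Qed.

Lemma is_lim_log_ratio_m_infty a t : 0 < t -> is_lim (log_ratio a t) m_infty 0.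
Proof.
  intros Ht; apply is_lim_m_infty_of_opp.
  apply (is_lim_ext (log_ratio (- a) t)); [| apply is_lim_log_ratio_p_infty; auto].
  intros x; unfold log_ratio.
  replace ((- x) ^ 2) with (x ^ 2) by ring; replace ((- x + a) ^ 2) with ((x + - a) ^ 2) by ring.
  reflexivity.
Qed.

Lemma is_lim_affine_p_infty a t : 0 < t -> is_lim (fun x => (x + a) / t) p_infty p_infty.
Proof.
  intros Ht; apply is_lim_spec; intros M; exists (M * t - a); intros x Hx.
  apply Rlt_div_r; lra.
Qed.

Lemma is_lim_atan_affine_p_infty a t : 0 < t -> is_lim (fun x => atan ((x + a) / t)) p_infty (PI / 2).
Proof.
  intros Ht; apply (is_lim_comp atan _ p_infty (PI / 2) p_infty).
  - apply is_lim_atan_p_infty.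
  - apply is_lim_affine_p_infty; auto.
  - exists 0; intros; discriminate.
Qed.

Lemma is_lim_atan_affine_m_infty a t : 0 < t -> is_lim (fun x => atan ((x + a) / t)) m_infty (- (PI / 2)).
Proof.
  intros Ht; apply is_lim_m_infty_of_opp.
  apply (is_lim_ext (fun x => - atan ((x + - a) / t))).
  { intros x; rewrite <- atan_opp; f_equal; field; lra. }
  apply (is_lim_opp _ _ (PI / 2)), is_lim_atan_affine_p_infty; auto.
Qed.

Lemma is_RInt_line_log_integrand_dt_0_1 : is_RInt_line (log_integrand_dt 0 1) (log_potential_dt 0 1).
Proof.
  pose proof PI_RGT_0.
  set (c := / (2 * PI)).
  set (F := fun x => x / (1 + x ^ 2)).
  assert (HF : forall x, 1 < x -> Rabs (F x) <= 1 / x /\ Rabs (F (- x)) <= 1 / x).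
  { intros x Hx; unfold F; rewrite !Rabs_div, Rabs_Ropp, !Rabs_pos_eq by nra.
    split; apply Rdiv_le_Rdiv; nra. }
  replace (log_potential_dt 0 1) with (c * (0 + PI / 2) - c * (0 + - (PI / 2)))
    by (unfold log_potential_dt, c; field; lra).
  apply (is_RInt_line_derive (fun x => c * (F x + atan x))).
  - intros x; unfold c, F, log_integrand_dt, cauchy_density; pose proof (pow2_ge_0 x).
    auto_derive; [simpl in *; lra|]; simpl in *; field; lra.
  - intros; apply continuous_log_integrand_dt; lra.
  - apply (is_lim_scal_l _ c m_infty (0 + - (PI / 2))), (is_lim_plus' _ _ _ 0).
    + apply is_lim_m_infty_of_opp, (is_lim_p_infty_of_abs_le_inv _ 1 1); apply HF.
    + apply is_lim_atan_m_infty.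
  - apply (is_lim_scal_l _ c p_infty (0 + PI / 2)), (is_lim_plus' _ _ _ 0).
    + apply (is_lim_p_infty_of_abs_le_inv _ 1 1); apply HF.
    + apply is_lim_atan_p_infty.
Qed.

(* Partial fractions: with [D = 4 a^2 + (a^2 + t^2 - 1)^2 <> 0],
   [1 / ((1 + x^2) ((x + a)^2 + t^2)) = (p x + q) / (1 + x^2) + (w - p x) / ((x + a)^2 + t^2)]. *)
Lemma is_RInt_line_log_integrand_dt_generic a t :
  0 < t -> 4 * a ^ 2 + (a ^ 2 + t ^ 2 - 1) ^ 2 <> 0 ->
  is_RInt_line (log_integrand_dt a t) (log_potential_dt a t).
Proof.
  intros Ht HD; pose proof PI_RGT_0.
  set (D := 4 * a ^ 2 + (a ^ 2 + t ^ 2 - 1) ^ 2) in *.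
  set (p := - 2 * a / D); set (q := (a ^ 2 + t ^ 2 - 1) / D).
  set (w := 1 - (a ^ 2 + t ^ 2 - 1) * (a ^ 2 + t ^ 2) / D).
  set (c1 := / PI * t * (p / 2)); set (c2 := / PI * t * q); set (c3 := / PI * (w + p * a)).
  replace (log_potential_dt a t)
    with ((c1 * 0 + c2 * (PI / 2) + c3 * (PI / 2)) - (c1 * 0 + c2 * - (PI / 2) + c3 * - (PI / 2))).
  2: { unfold c1, c2, c3, p, q, w, log_potential_dt, D; field.
       repeat split; first [exact HD | apply PI_neq0 | apply Rgt_not_eq, sum_sqr_pos; lra]. }
  apply (is_RInt_line_derive (fun x => c1 * log_ratio a t x + c2 * atan x + c3 * atan ((x + a) / t))).
  - intros x; unfold c1, c2, c3, log_ratio, log_integrand_dt, cauchy_density.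
    pose proof (sum_sqr_pos (x + a) t Ht); pose proof (pow2_ge_0 x).
    auto_derive.
    + repeat split; try lra; apply Rdiv_lt_0_compat; lra.
    + unfold p, q, w, D in *; simpl in *; field; repeat split; lra.
  - intros; apply continuous_log_integrand_dt; lra.
  - repeat apply is_lim_plus'.
    + apply (is_lim_scal_l _ c1 m_infty 0), is_lim_log_ratio_m_infty; auto.
    + apply (is_lim_scal_l _ c2 m_infty (- (PI / 2))), is_lim_atan_m_infty.
    + apply (is_lim_scal_l _ c3 m_infty (- (PI / 2))), is_lim_atan_affine_m_infty; auto.
  - repeat apply is_lim_plus'.
    + apply (is_lim_scal_l _ c1 p_infty 0), is_lim_log_ratio_p_infty; auto.
    + apply (is_lim_scal_l _ c2 p_infty (PI / 2)), is_lim_atan_p_infty.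
    + apply (is_lim_scal_l _ c3 p_infty (PI / 2)), is_lim_atan_affine_p_infty; auto.
Qed.

Lemma is_RInt_line_log_integrand_dt a t : 0 < t ->
  is_RInt_line (log_integrand_dt a t) (log_potential_dt a t).
Proof.
  intros Ht.
  destruct (Req_dec (4 * a ^ 2 + (a ^ 2 + t ^ 2 - 1) ^ 2) 0) as [HD | HD];
    [| apply is_RInt_line_log_integrand_dt_generic; auto].
  assert (a = 0 /\ t = 1) as [-> ->]; [| apply is_RInt_line_log_integrand_dt_0_1].
  pose proof (pow2_ge_0 a); pose proof (pow2_ge_0 (a ^ 2 + t ^ 2 - 1)).
  assert (a = 0) by (simpl in *; nra); subst a.
  assert (Ht2 : 0 ^ 2 + t ^ 2 - 1 = 0) by (simpl in *; nra).
  split; auto; simpl in *; nra.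
Qed.

Lemma is_derive_log_potential a t : 0 < t -> is_derive (log_potential a) t (log_potential_dt a t).
Proof.
  intros Ht.
  apply (is_derive_RInt_line (log_integrand a) (log_integrand_dt a) (log_integrand_dt2 a)
           (log_potential a) (log_potential_dt a) (fun x => / (t / 2) ^ 2 * cauchy_density x)
           (/ (t / 2) ^ 2 * 1) (t / 2)); try lra.
  - intros s x Hs; pose proof (sum_sqr_pos (x + a) s ltac:(lra)).
    unfold log_integrand, log_integrand_dt; auto_derive; [lra|]; field; lra.
  - intros s x Hs; pose proof (sum_sqr_pos (x + a) s ltac:(lra)).
    unfold log_integrand_dt, log_integrand_dt2; auto_derive; [lra|]; field; lra.
  - intros s x Hs; unfold log_integrand_dt2.
    pose proof (cauchy_density_pos x); pose proof (pow2_ge_0 (x + a)).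
    pose proof (sum_sqr_pos (x + a) s ltac:(lra)).
    assert ((t / 2) ^ 2 <= s ^ 2) by (apply pow_incr; lra).
    assert (0 < (t / 2) ^ 2) by (apply pow_lt; lra).
    rewrite Rabs_mult, (Rabs_pos_eq (cauchy_density x)) by lra.
    apply Rmult_le_compat_r; [lra|].
    assert (Hv : (t / 2) ^ 2 <= (x + a) ^ 2 + s ^ 2) by lra.
    assert (Huv : Rabs ((x + a) ^ 2 - s ^ 2) <= (x + a) ^ 2 + s ^ 2) by (apply Rabs_le_between; lra).
    set (v := (x + a) ^ 2 + s ^ 2) in *.
    apply Rle_trans with (/ v); [| apply Rinv_le_contravar; lra].
    rewrite Rabs_div by (apply pow_nonzero; lra).
    rewrite (Rabs_pos_eq (v ^ 2)) by (apply pow2_ge_0).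
    apply Rle_div_l; [apply pow_lt; lra|].
    replace (/ v * v ^ 2) with v by (field; lra); auto.
  - apply is_RInt_line_scal, is_RInt_line_cauchy_density.
  - intros s Hs; apply is_RInt_line_log_potential; lra.
  - intros s Hs; apply is_RInt_line_log_integrand_dt; lra.
Qed.

Lemma is_derive_log_potential_closed a t :
  0 < t -> is_derive (log_potential_closed a) t (log_potential_dt a t).
Proof.
  intros Ht; pose proof (sum_sqr_pos a (t + 1) ltac:(lra)).
  unfold log_potential_closed, log_potential_dt; auto_derive; [lra|]; field; lra.
Qed.

Lemma log_potential_sub_closed_const a t1 t2 : 0 < t1 -> 0 < t2 ->
  log_potential a t1 - log_potential_closed a t1 = log_potential a t2 - log_potential_closed a t2.
Proof.
  intros Ht1 Ht2.
  assert (Hd : forall x, Rmin t1 t2 <= x ->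
            is_derive (fun s => log_potential a s - log_potential_closed a s) x 0).
  { intros x Hx; assert (0 < x) by (unfold Rmin in Hx; destruct Rle_dec; lra).
    replace 0 with (log_potential_dt a x - log_potential_dt a x) by ring.
    apply (is_derive_minus (log_potential a) (log_potential_closed a));
      [apply is_derive_log_potential | apply is_derive_log_potential_closed]; auto. }
  destruct (MVT_gen (fun s => log_potential a s - log_potential_closed a s) t1 t2 (fun _ => 0))
    as [c [_ E]].
  - intros x Hx; apply Hd; lra.
  - intros x Hx; apply continuity_pt_of_is_derive with 0, Hd; lra.
  - simpl in E; lra.
Qed.

Lemma ln_1_add_sqr_le z : 0 <= z -> ln (1 + z * z) <= 4 * sqrt z.
Proof.
  intros Hz; pose proof (sqrt_pos z); pose proof (sqrt_sqrt z Hz).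
  apply Rle_trans with (ln ((1 + z) * (1 + z))); [apply ln_le; nra|].
  rewrite ln_sqr by lra.
  apply Rle_trans with (2 * ln ((1 + sqrt z) * (1 + sqrt z))); [apply Rmult_le_compat_l, ln_le; nra|].
  rewrite ln_sqr by lra; pose proof (ln_1_add_le (sqrt z)); lra.
Qed.

Lemma log_potential_near_ln a t : 1 <= t ->
  Rabs (log_potential a t - ln t) <= 2 * sqrt (1 + Rabs a) * weight_mean / sqrt t.
Proof.
  intros Ht; assert (Hst : 0 < sqrt t) by (apply sqrt_lt_R0; lra).
  replace (2 * sqrt (1 + Rabs a) * weight_mean / sqrt t)
    with (2 * sqrt (1 + Rabs a) / sqrt t * weight_mean) by (field; lra).
  apply (is_RInt_line_abs_le (fun x => log_integrand a t x - ln t * cauchy_density x)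
           (fun x => 2 * sqrt (1 + Rabs a) / sqrt t * weighted_density x)).
  - replace (log_potential a t - ln t) with (log_potential a t - ln t * 1) by ring.
    apply is_RInt_line_minus; [apply is_RInt_line_log_potential; lra|].
    apply is_RInt_line_scal, is_RInt_line_cauchy_density.
  - apply is_RInt_line_scal, is_RInt_line_weight_mean.
  - intros x; unfold log_integrand, weighted_density; pose proof (cauchy_density_pos x).
    rewrite <- Rmult_minus_distr_r, Rabs_mult, (Rabs_pos_eq (cauchy_density x)), <- Rmult_assoc by lra.
    apply Rmult_le_compat_r; [lra|].
    set (z := Rabs (x + a) / t).
    assert (Hz : 0 <= z) by (apply Rdiv_le_0_compat; [apply Rabs_pos | lra]).
    replace (/ 2 * ln ((x + a) ^ 2 + t ^ 2) - ln t) with (/ 2 * ln (1 + z * z)).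
    2: { replace ((x + a) ^ 2 + t ^ 2) with ((t * t) * (1 + z * z))
           by (unfold z; rewrite <- (pow2_abs (x + a)); field; lra).
         rewrite ln_mult, ln_sqr by nra; field. }
    assert (0 <= ln (1 + z * z)) by (rewrite <- ln_1; apply ln_le; nra).
    rewrite Rabs_pos_eq by lra.
    apply Rle_trans with (2 * sqrt z); [pose proof (ln_1_add_sqr_le z Hz); lra|].
    unfold z; rewrite sqrt_div_alt by lra.
    assert (Hsq : sqrt (Rabs (x + a)) <= sqrt (1 + Rabs a) * weight x).
    { unfold weight; rewrite <- sqrt_mult_alt by (pose proof (Rabs_pos a); lra).
      apply sqrt_le_1_alt; pose proof (Rabs_triang x a); pose proof (Rabs_pos x);
        pose proof (Rabs_pos a); nra. }
    assert (0 < / sqrt t) by (apply Rinv_0_lt_compat; lra).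
    unfold Rdiv; nra.
Qed.

Lemma log_potential_closed_near_ln a t : 1 <= t ->
  Rabs (log_potential_closed a t - ln t) <= (a ^ 2 + 3) / 2 / t.
Proof.
  intros Ht; unfold log_potential_closed; pose proof (pow2_ge_0 a).
  set (w := (a ^ 2 + 2 * t + 1) / (t * t)).
  assert (Hw : 0 <= w) by (apply Rdiv_le_0_compat; nra).
  replace (a ^ 2 + (t + 1) ^ 2) with ((t * t) * (1 + w)) by (unfold w; field; lra).
  rewrite ln_mult, ln_sqr by nra.
  replace (/ 2 * (2 * ln t + ln (1 + w)) - ln t) with (/ 2 * ln (1 + w)) by field.
  assert (0 <= ln (1 + w)) by (rewrite <- ln_1; apply ln_le; lra).
  rewrite Rabs_pos_eq by lra.
  apply Rle_trans with (/ 2 * w); [pose proof (ln_1_add_le w Hw); lra|].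
  replace ((a ^ 2 + 3) / 2 / t) with (/ 2 * ((a ^ 2 + 3) / t)) by (field; lra).
  apply Rmult_le_compat_l; [lra|]; apply Rdiv_le_Rdiv; nra.
Qed.

Lemma eq_0_of_abs_le_div_sqrt c C : (forall s, 1 <= s -> Rabs c <= C / sqrt s) -> c = 0.
Proof.
  intros Hc; destruct (Req_dec c 0) as [|Hne]; auto; exfalso.
  assert (Hcpos : 0 < Rabs c) by (apply Rabs_pos_lt; auto).
  assert (HC : 0 <= C) by (specialize (Hc 1 (Rle_refl 1)); rewrite sqrt_1 in Hc; lra).
  assert (Hs : 1 <= C / Rabs c + 1) by (assert (0 <= C / Rabs c) by (apply Rdiv_le_0_compat; lra); lra).
  specialize (Hc ((C / Rabs c + 1) ^ 2) ltac:(nra)).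
  rewrite sqrt_pow2 in Hc by lra.
  apply Rle_div_r in Hc; [|lra].
  replace (Rabs c * (C / Rabs c + 1)) with (C + Rabs c) in Hc by (field; lra); lra.
Qed.

(* Both sides have the same [t]-derivative and are [ln t + O (1 / sqrt t)]. *)
Lemma is_RInt_line_log_integrand a t : 0 < t ->
  is_RInt_line (log_integrand a t) (log_potential_closed a t).
Proof.
  intros Ht; replace (log_potential_closed a t) with (log_potential a t);
    [apply is_RInt_line_log_potential; auto|].
  apply Rminus_diag_uniq.
  apply (eq_0_of_abs_le_div_sqrt _ (2 * sqrt (1 + Rabs a) * Rabs weight_mean + (a ^ 2 + 3) / 2)).
  intros s Hs; rewrite (log_potential_sub_closed_const a t s) by lra.
  assert (Hss : 1 <= sqrt s) by (rewrite <- sqrt_1; apply sqrt_le_1_alt; lra).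
  pose proof (log_potential_near_ln a s Hs); pose proof (log_potential_closed_near_ln a s Hs).
  assert (2 * sqrt (1 + Rabs a) * weight_mean / sqrt s <= 2 * sqrt (1 + Rabs a) * Rabs weight_mean / sqrt s).
  { apply Rmult_le_compat_r; [left; apply Rinv_0_lt_compat; lra|].
    apply Rmult_le_compat_l; [pose proof (sqrt_pos (1 + Rabs a)); lra | apply Rle_abs]. }
  assert ((a ^ 2 + 3) / 2 / s <= (a ^ 2 + 3) / 2 / sqrt s).
  { pose proof (pow2_ge_0 a); pose proof (sqrt_sqrt s ltac:(lra)).
    apply Rdiv_le_Rdiv; [lra | lra | apply Rmult_le_compat_l; nra]. }
  replace (log_potential a s - log_potential_closed a s)
    with ((log_potential a s - ln s) - (log_potential_closed a s - ln s)) by ring.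
  eapply Rle_trans; [apply Rabs_triang|]; rewrite Rabs_Ropp.
  unfold Rdiv in *; lra.
Qed.

(* Also for [z = 0], where both sides are the junk value [ln 0 = 0]. *)
Lemma ln_Cmod (z : C) : ln (Cmod z) = / 2 * ln (fst z ^ 2 + snd z ^ 2).
Proof.
  unfold Cmod; set (u := fst z ^ 2 + snd z ^ 2).
  assert (Hu : 0 <= u) by (unfold u; pose proof (pow2_ge_0 (fst z)); pose proof (pow2_ge_0 (snd z)); lra).
  destruct Hu as [Hu | <-].
  - rewrite <- (sqrt_sqrt u) at 2 by lra.
    rewrite ln_sqr by (apply sqrt_lt_R0; auto); field.
  - assert (Hln0 : ln 0 = 0).
    { unfold ln; destruct (Rlt_dec 0 0) as [H|H]; [destruct (Rlt_irrefl 0 H) | reflexivity]. }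
    rewrite sqrt_0, Hln0; ring.
Qed.

(* Reduces to [is_RInt_line_log_integrand]: [|p x + q|^2 = |p|^2 ((x + a)^2 + b^2)]
   with [a + i b = q / p]. *)
Lemma is_RInt_line_ln_Cmod_affine (p q : C) : 0 < Im (q * Cconj p) ->
  is_RInt_line (fun x => ln (Cmod (p * RtoC x + q)%C) * cauchy_density x) (ln (Cmod (q + Ci * p)%C)).
Proof.
  destruct p as [p1 p2], q as [q1 q2]; intros Hb; unfold Im, Cconj, Cmult in Hb; simpl in Hb.
  set (n := p1 ^ 2 + p2 ^ 2).
  assert (Hn : 0 < n) by (unfold n; apply Rnot_le_lt; intros Hn;
    assert (p1 = 0) by nra; assert (p2 = 0) by nra; subst; lra).
  set (a := (p1 * q1 + p2 * q2) / n); set (b := (q1 * - p2 + q2 * p1) / n).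
  assert (Hbp : 0 < b) by (unfold b; apply Rdiv_lt_0_compat; lra).
  apply (is_RInt_line_ext (fun x => / 2 * ln n * cauchy_density x + log_integrand a b x)).
  - intros x; rewrite ln_Cmod; unfold log_integrand, Cplus, Cmult, RtoC; cbn [fst snd].
    replace ((p1 * x - p2 * 0 + q1) ^ 2 + (p1 * 0 + p2 * x + q2) ^ 2) with (n * ((x + a) ^ 2 + b ^ 2))
      by (unfold a, b, n in *; field; lra).
    rewrite ln_mult by (first [exact Hn | apply sum_sqr_pos; lra]); ring.
  - replace (ln (Cmod ((q1, q2) + Ci * (p1, p2))%C))
      with (/ 2 * ln n * 1 + log_potential_closed a b).
    + apply (is_RInt_line_plus (fun x => / 2 * ln n * cauchy_density x) (log_integrand a b)).
      * apply is_RInt_line_scal, is_RInt_line_cauchy_density.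
      * apply is_RInt_line_log_integrand; auto.
    + rewrite ln_Cmod; unfold log_potential_closed, Cplus, Cmult, Ci; cbn [fst snd].
      replace ((q1 + (0 * p1 - 1 * p2)) ^ 2 + (q2 + (0 * p2 + 1 * p1)) ^ 2) with (n * (a ^ 2 + (b + 1) ^ 2))
        by (unfold a, b, n in *; field; lra).
      rewrite ln_mult by (first [exact Hn | apply sum_sqr_pos; lra]); ring.
Qed.

(** * Iterated Cauchy expectations *)

Lemma cauchy_expect_ext n : forall F G L,
  (forall xs, F xs = G xs) -> cauchy_expect n F L -> cauchy_expect n G L.
Proof.
  induction n as [|n IH]; intros F G L EFG HF; simpl in *.
  - rewrite <- EFG; auto.
  - destruct HF as [g [Hg Hint]]; exists g; split; auto.
    intros x; apply (IH (fun xs => F (x :: xs))); auto.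
Qed.

Lemma cauchy_expect_snoc n : forall F H L,
  (forall xs, is_RInt_line (fun x => F (xs ++ [x]) * cauchy_density x) (H xs)) ->
  cauchy_expect n H L -> cauchy_expect (S n) F L.
Proof.
  induction n as [|n IH]; intros F H L HF HH.
  - simpl in HH; subst L; exists (fun x => F [x]); split; [reflexivity|].
    apply is_RInt_line_improper_int, (HF []).
  - destruct HH as [g [Hg Hint]]; exists g; split; auto.
    intros x; apply (IH (fun xs => F (x :: xs)) (fun xs => H (x :: xs))); auto.
    intros xs; apply (HF (x :: xs)).
Qed.

Lemma cauchy_expect_le n : forall F G a b d,
  cauchy_expect n F a -> cauchy_expect n G b -> (forall xs, F xs <= G xs + d) -> a <= b + d.
Proof.
  induction n as [|n IH]; intros F G a b d HF HG Hle; simpl in *.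
  - subst; auto.
  - destruct HF as [gF [HgF HiF]], HG as [gG [HgG HiG]].
    apply is_RInt_line_improper_int in HiF; apply is_RInt_line_improper_int in HiG.
    replace (b + d) with (b + d * 1) by ring.
    apply (is_RInt_line_le _ (fun x => gG x * cauchy_density x + d * cauchy_density x) _ _ HiF).
    + apply is_RInt_line_plus, is_RInt_line_scal, is_RInt_line_cauchy_density; auto.
    + intros x; pose proof (cauchy_density_pos x).
      assert (gF x <= gG x + d) by (apply (IH (fun xs => F (x :: xs)) (fun xs => G (x :: xs))); auto).
      nra.
Qed.

Fixpoint weight_sum (l : list R) : R :=
  match l with [] => 0 | x :: l => weight x + weight_sum l end.

Lemma weight_sum_nonneg l : 0 <= weight_sum l.
Proof. induction l as [|x l IH]; simpl; [lra|]; pose proof (weight_ge_1 x); lra. Qed.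

Lemma weight_sum_app l1 l2 : weight_sum (l1 ++ l2) = weight_sum l1 + weight_sum l2.
Proof. induction l1 as [|x l IH]; simpl; [|rewrite IH]; ring. Qed.

Lemma cauchy_expect_weight_sum n : forall c B,
  cauchy_expect n (fun xs => c + B * weight_sum xs) (c + INR n * B * weight_mean).
Proof.
  induction n as [|n IH]; intros c B; cbn [cauchy_expect]; [simpl; ring|].
  exists (fun x => (c + B * weight x) + INR n * B * weight_mean); split.
  - intros x; apply (cauchy_expect_ext n (fun xs => (c + B * weight x) + B * weight_sum xs));
      [intros; simpl; ring | apply IH].
  - apply is_RInt_line_improper_int.
    apply (is_RInt_line_ext
             (fun x => (c + INR n * B * weight_mean) * cauchy_density x + B * weighted_density x));
      [intros x; unfold weighted_density; ring|].
    replace (c + INR (S n) * B * weight_mean)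
      with ((c + INR n * B * weight_mean) * 1 + B * weight_mean) by (rewrite S_INR; ring).
    apply is_RInt_line_plus; apply is_RInt_line_scal;
      [apply is_RInt_line_cauchy_density | apply is_RInt_line_weight_mean].
Qed.

Lemma cauchy_expect_abs_le n F L A B : cauchy_expect n F L ->
  (forall xs, Rabs (F xs) <= A + B * weight_sum xs) -> Rabs L <= A + INR n * B * weight_mean.
Proof.
  intros HF HB.
  assert (HFB : forall xs, - A + - B * weight_sum xs <= F xs <= A + B * weight_sum xs)
    by (intros xs; specialize (HB xs); apply Rabs_le_between in HB; lra).
  apply Rabs_le_between; split.
  - assert (- A + INR n * - B * weight_mean <= L + 0); [|lra].
    apply (cauchy_expect_le n _ F _ _ 0 (cauchy_expect_weight_sum n (- A) (- B)) HF).
    intros xs; specialize (HFB xs); lra.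
  - assert (L <= A + INR n * B * weight_mean + 0); [|lra].
    apply (cauchy_expect_le n F _ _ _ 0 HF (cauchy_expect_weight_sum n A B)).
    intros xs; specialize (HFB xs); lra.
Qed.

Definition weight_bounded (B : R) (F : list R -> R) : Prop :=
  exists A, forall xs, Rabs (F xs) <= A + B * weight_sum xs.

Definition coord_equicontinuous (F : list R -> R) : Prop :=
  forall pre x eps, 0 < eps -> exists d, 0 < d /\
    forall y rest, Rabs (x - y) < d -> Rabs (F (pre ++ x :: rest) - F (pre ++ y :: rest)) <= eps.

Lemma continuous_cauchy_expect_head n F g :
  coord_equicontinuous F -> (forall x, cauchy_expect n (fun xs => F (x :: xs)) (g x)) ->
  forall x, continuous g x.
Proof.
  intros HF Hg x0; apply continuity_pt_filterlim; intros eps Heps.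
  destruct (HF [] x0 (eps / 2) ltac:(lra)) as [d [Hd Hxy]]; simpl in Hxy.
  exists d; split; [lra|]; intros x [_ Hx]; simpl in *; unfold R_dist in *.
  rewrite Rabs_minus_sym in Hx.
  assert (HFx : forall xs, F (x :: xs) <= F (x0 :: xs) + eps / 2 /\ F (x0 :: xs) <= F (x :: xs) + eps / 2)
    by (intros xs; specialize (Hxy x xs Hx); apply Rabs_le_between in Hxy; lra).
  pose proof (cauchy_expect_le n _ _ _ _ _ (Hg x) (Hg x0) (fun xs => proj1 (HFx xs))).
  pose proof (cauchy_expect_le n _ _ _ _ _ (Hg x0) (Hg x) (fun xs => proj2 (HFx xs))).
  apply Rabs_lt_between; lra.
Qed.

Lemma cauchy_expect_exists n : forall F B,
  weight_bounded B F -> coord_equicontinuous F -> exists L, cauchy_expect n F L.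
Proof.
  induction n as [|n IH]; intros F B [A HA] HF; [exists (F []); reflexivity|].
  assert (HAx : forall x xs, Rabs (F (x :: xs)) <= (A + B * weight x) + B * weight_sum xs)
    by (intros x xs; specialize (HA (x :: xs)); simpl in HA; lra).
  set (g := fun x => epsilon (inhabits 0) (cauchy_expect n (fun xs => F (x :: xs)))).
  assert (Hg : forall x, cauchy_expect n (fun xs => F (x :: xs)) (g x)).
  { intros x; apply epsilon_spec, (IH _ B); [exists (A + B * weight x); auto|].
    intros pre y eps Heps; apply (HF (x :: pre) y eps Heps). }
  set (c := Rabs A + Rabs (INR n * B * weight_mean)).
  destruct (ex_RInt_line_dominated (fun x => g x * cauchy_density x)
              (fun x => c * cauchy_density x + Rabs B * weighted_density x) (c * 1 + Rabs B * weight_mean))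
    as [L HL].
  - apply ex_RInt_of_continuous; intros x.
    apply (continuous_mult g cauchy_density);
      [apply (continuous_cauchy_expect_head n F); auto | apply continuous_cauchy_density].
  - apply is_RInt_line_plus; apply is_RInt_line_scal;
      [apply is_RInt_line_cauchy_density | apply is_RInt_line_weight_mean].
  - intros x; pose proof (cauchy_density_pos x); pose proof (weight_ge_1 x).
    pose proof (cauchy_expect_abs_le n _ _ _ _ (Hg x) (HAx x)).
    unfold weighted_density; rewrite Rabs_mult, (Rabs_pos_eq (cauchy_density x)) by lra.
    pose proof (Rle_abs A); pose proof (Rle_abs (INR n * B * weight_mean)).
    assert (B * weight x <= Rabs B * weight x) by (apply Rmult_le_compat_r; [lra | apply Rle_abs]).
    unfold c; nra.
  - exists L, g; split; auto; apply is_RInt_line_improper_int; auto.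
Qed.

Definition det (A : mat2) : R := m11 A * m22 A - m12 A * m21 A.

Lemma mat2_eq A B : m11 A = m11 B -> m12 A = m12 B -> m21 A = m21 B -> m22 A = m22 B -> A = B.
Proof. destruct A, B; simpl; intros; subst; auto. Qed.

Lemma mat2_mul_assoc A B C : mat2_mul A (mat2_mul B C) = mat2_mul (mat2_mul A B) C.
Proof. apply mat2_eq; destruct A, B, C; simpl; ring. Qed.

Lemma mat2_mul_1_l A : mat2_mul mat2_id A = A.
Proof. apply mat2_eq; destruct A; simpl; ring. Qed.

Lemma mat2_mul_1_r A : mat2_mul A mat2_id = A.
Proof. apply mat2_eq; destruct A; simpl; ring. Qed.

Lemma det_mul A B : det (mat2_mul A B) = det A * det B.
Proof. destruct A, B; unfold det; simpl; ring. Qed.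

Lemma det_Ymat xi x : det (Ymat xi x) = 1.
Proof. unfold det, Ymat; simpl; ring. Qed.

Lemma fold_left_Ymat xi l A :
  fold_left (fun acc e => mat2_mul (Ymat xi e) acc) l A = mat2_mul (Sprod xi l) A.
Proof.
  revert A; induction l as [|e l IH]; intros A; unfold Sprod; simpl.
  - rewrite mat2_mul_1_l; auto.
  - rewrite !IH, mat2_mul_1_r, mat2_mul_assoc; auto.
Qed.

Lemma Sprod_snoc xi l x : Sprod xi (l ++ [x]) = mat2_mul (Ymat xi x) (Sprod xi l).
Proof. unfold Sprod at 1; rewrite fold_left_app; reflexivity. Qed.

Lemma Sprod_app_cons xi pre x rest :
  Sprod xi (pre ++ x :: rest) = mat2_mul (Sprod xi rest) (mat2_mul (Ymat xi x) (Sprod xi pre)).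
Proof. unfold Sprod at 1; rewrite fold_left_app; simpl; rewrite fold_left_Ymat; auto. Qed.

Lemma det_Sprod xi l : det (Sprod xi l) = 1.
Proof.
  induction l as [|x l IH] using rev_ind; [unfold det; simpl; ring|].
  rewrite Sprod_snoc, det_mul, IH, det_Ymat; ring.
Qed.

(** * The expected log-modulus of a complex linear form *)

Definition gamma (xi : R) : R := (Rabs xi + sqrt (xi ^ 2 + 4)) / 2.

Definition kappa (xi : R) : R := sign xi / gamma xi.

Section Constants.

Variable xi : R.
Hypothesis hxi : xi <> 0.

Lemma gamma_ge_1 : 1 <= gamma xi.
Proof.
  unfold gamma; pose proof (Rabs_pos xi).
  assert (2 <= sqrt (xi ^ 2 + 4)).
  { rewrite <- (sqrt_pow2 2) by lra; apply sqrt_le_1_alt; pose proof (pow2_ge_0 xi); lra. }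
  lra.
Qed.

Lemma gamma_sqr : gamma xi * gamma xi = Rabs xi * gamma xi + 1.
Proof.
  unfold gamma; pose proof (sqrt_sqrt (xi ^ 2 + 4) ltac:(pose proof (pow2_ge_0 xi); lra)).
  assert (Rabs xi * Rabs xi = xi ^ 2) by (rewrite <- pow2_abs; simpl; ring); nra.
Qed.

Lemma sign_sqr : sign xi * sign xi = 1.
Proof.
  destruct (Rlt_or_le 0 xi); [rewrite sign_eq_1 by auto | rewrite sign_eq_m1 by lra]; ring.
Qed.

Lemma Rabs_sign : Rabs (sign xi) = 1.
Proof.
  destruct (Rlt_or_le 0 xi); [rewrite sign_eq_1, Rabs_R1 | rewrite sign_eq_m1, Rabs_m1]; lra.
Qed.

Lemma sign_mul_Rabs : sign xi * Rabs xi = xi.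
Proof.
  destruct (Rlt_or_le 0 xi);
    [rewrite sign_eq_1, Rabs_pos_eq | rewrite sign_eq_m1, Rabs_left]; lra.
Qed.

Lemma xi_add_kappa : xi + kappa xi = sign xi * gamma xi.
Proof.
  pose proof gamma_ge_1; unfold kappa; rewrite <- sign_mul_Rabs at 1.
  replace (sign xi * gamma xi) with (sign xi * (gamma xi * gamma xi) / gamma xi) by (field; lra).
  rewrite gamma_sqr; field; lra.
Qed.

Lemma sign_mul_kappa : sign xi * kappa xi = / gamma xi.
Proof.
  pose proof gamma_ge_1; unfold kappa.
  replace (sign xi * (sign xi / gamma xi)) with (sign xi * sign xi / gamma xi) by (field; lra).
  rewrite sign_sqr; field; lra.
Qed.

Lemma xi_mul_kappa_pos : 0 < xi * kappa xi.
Proof.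
  pose proof gamma_ge_1.
  replace (xi * kappa xi) with (Rabs xi * (sign xi * kappa xi))
    by (rewrite <- Rmult_assoc, (Rmult_comm (Rabs xi)), sign_mul_Rabs; reflexivity).
  rewrite sign_mul_kappa; apply Rmult_lt_0_compat;
    [apply Rabs_pos_lt | apply Rinv_0_lt_compat; lra]; auto.
Qed.

Lemma kappa_sqr_le_1 : kappa xi ^ 2 <= 1.
Proof.
  pose proof gamma_ge_1; unfold kappa.
  replace ((sign xi / gamma xi) ^ 2) with (sign xi * sign xi / (gamma xi * gamma xi)) by (field; lra).
  rewrite sign_sqr; apply Rle_div_l; nra.
Qed.

End Constants.

(* [(1, eigen2 xi)] is an eigenvector, for the eigenvalue [i sign(xi) gamma(xi)],
   of [Y(i) = [[i xi, -1], [1, 0]]], the matrix [Ymat xi eps] at [eps = i]. *)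
Definition eigen2 (xi : R) : C := (0, - kappa xi).

Definition lin_form (xi : R) (al be : C) (S : mat2) : C :=
  (al * (m11 S + m12 S * eigen2 xi) + be * (m21 S + m22 S * eigen2 xi))%C.

Definition admissible (xi : R) (al be : C) : Prop := al <> 0%C /\ 0 <= xi * Im (be * Cconj al).

Lemma Cnorm2_pos (z : C) : z <> 0%C -> 0 < fst z ^ 2 + snd z ^ 2.
Proof.
  destruct z as [z1 z2]; simpl; intros Hz; apply Rnot_le_lt; intros Hle; apply Hz.
  assert (z1 = 0) by nra; assert (z2 = 0) by nra; subst; reflexivity.
Qed.

Section LogModulus.

Variable xi : R.
Hypothesis hxi : xi <> 0.

Lemma lin_form_Ymat_mul al be S x :
  lin_form xi al be (mat2_mul (Ymat xi x) S) =
  (xi * al * (m11 S + m12 S * eigen2 xi) * RtoC x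
   + (be * (m11 S + m12 S * eigen2 xi) - al * (m21 S + m22 S * eigen2 xi)))%C.
Proof.
  destruct al, be; unfold lin_form, eigen2, Ymat, Cmult, Cplus, Cminus, Copp, RtoC; simpl.
  f_equal; ring.
Qed.

Lemma Im_lin_form_coeff_pos al be S : admissible xi al be -> det S = 1 ->
  0 < Im ((be * (m11 S + m12 S * eigen2 xi) - al * (m21 S + m22 S * eigen2 xi))
          * Cconj (xi * al * (m11 S + m12 S * eigen2 xi)))%C.
Proof.
  intros [Hal Hbe] HS; pose proof (Cnorm2_pos al Hal) as Hal2; pose proof (xi_mul_kappa_pos xi hxi).
  destruct al as [a1 a2], be as [b1 b2]; simpl in Hal2.
  unfold det in HS; unfold Im, Cconj, Cmult in Hbe; simpl in Hbe.
  set (u1 := m11 S); set (u2 := - kappa xi * m12 S).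
  match goal with |- 0 < ?e => replace e with
    ((u1 ^ 2 + u2 ^ 2) * (xi * (b2 * a1 + b1 * - a2)) + xi * kappa xi * (a1 ^ 2 + a2 ^ 2) * det S) end.
  2: { unfold u1, u2, det, eigen2, Im, Cconj, Cmult, Cplus, Cminus, Copp, RtoC; simpl; ring. }
  unfold det; rewrite HS.
  assert (0 <= (u1 ^ 2 + u2 ^ 2) * (xi * (b2 * a1 + b1 * - a2)))
    by (apply Rmult_le_pos; [pose proof (pow2_ge_0 u1); pose proof (pow2_ge_0 u2); lra | lra]).
  assert (0 < xi * kappa xi * (a1 ^ 2 + a2 ^ 2) * 1) by (rewrite Rmult_1_r; apply Rmult_lt_0_compat; lra).
  lra.
Qed.

Lemma is_RInt_line_ln_Cmod_lin_form al be S : admissible xi al be -> det S = 1 ->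
  is_RInt_line (fun x => ln (Cmod (lin_form xi al be (mat2_mul (Ymat xi x) S))) * cauchy_density x)
    (ln (Cmod (lin_form xi (be + Ci * xi * al) (- al) S))).
Proof.
  intros Hadm HS.
  apply (is_RInt_line_ext (fun x => ln (Cmod (xi * al * (m11 S + m12 S * eigen2 xi) * RtoC x
           + (be * (m11 S + m12 S * eigen2 xi) - al * (m21 S + m22 S * eigen2 xi)))%C) * cauchy_density x)).
  { intros x; rewrite lin_form_Ymat_mul; reflexivity. }
  replace (lin_form xi (be + Ci * xi * al) (- al) S)
    with ((be * (m11 S + m12 S * eigen2 xi) - al * (m21 S + m22 S * eigen2 xi))
          + Ci * (xi * al * (m11 S + m12 S * eigen2 xi)))%C by (unfold lin_form; ring).
  apply is_RInt_line_ln_Cmod_affine, Im_lin_form_coeff_pos; auto.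
Qed.

Lemma admissible_step al be : admissible xi al be -> admissible xi (be + Ci * xi * al) (- al).
Proof.
  intros [Hal Hbe]; pose proof (Cnorm2_pos al Hal) as Hal2.
  assert (Hxi2 : 0 < xi ^ 2) by (apply pow2_gt_0; auto).
  destruct al as [a1 a2], be as [b1 b2]; simpl in Hal2.
  unfold Im, Cconj, Cmult in Hbe; simpl in Hbe.
  assert (Hstep : xi * Im (- (a1, a2) * Cconj ((b1, b2) + Ci * xi * (a1, a2)))%C
                  = xi * (b2 * a1 + b1 * - a2) + xi ^ 2 * (a1 ^ 2 + a2 ^ 2))
    by (unfold Im, Cconj, Cmult, Cplus, Copp, Ci, RtoC; simpl; ring).
  split.
  - intros Hzero; apply (f_equal (fun z => xi * Im (- (a1, a2) * Cconj z)%C)) in Hzero.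
    rewrite Hstep in Hzero; unfold Im, Cconj, Cmult, Copp, RtoC in Hzero; simpl in Hzero.
    assert (0 < xi ^ 2 * (a1 ^ 2 + a2 ^ 2)) by (apply Rmult_lt_0_compat; lra); lra.
  - rewrite Hstep; assert (0 <= xi ^ 2 * (a1 ^ 2 + a2 ^ 2)) by (apply Rmult_le_pos; lra); lra.
Qed.

Lemma lin_form_id al be : lin_form xi al be mat2_id = (al + be * eigen2 xi)%C.
Proof. unfold lin_form, mat2_id; simpl; ring. Qed.

Lemma lin_form_eigen al be :
  ((be + Ci * xi * al) + - al * eigen2 xi = (Ci * sign xi * gamma xi) * (al + be * eigen2 xi))%C.
Proof.
  pose proof (xi_add_kappa xi hxi) as Hadd; pose proof (sign_mul_kappa xi hxi) as Hmul.
  pose proof (gamma_ge_1 xi) as Hg.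
  assert (Hsk : sign xi * gamma xi * kappa xi = 1)
    by (rewrite Rmult_assoc, (Rmult_comm (gamma xi)), <- Rmult_assoc, Hmul; field; lra).
  destruct al as [a1 a2], be as [b1 b2].
  assert (Ha1 := f_equal (fun u => u * a1) Hadd); assert (Ha2 := f_equal (fun u => u * a2) Hadd).
  assert (Hb1 := f_equal (fun u => u * b1) Hsk); assert (Hb2 := f_equal (fun u => u * b2) Hsk).
  simpl in *; unfold eigen2, Cmult, Cplus, Copp, Ci, RtoC; simpl; f_equal; lra.
Qed.

Lemma admissible_lin_form_id_neq_0 al be : admissible xi al be -> (al + be * eigen2 xi)%C <> 0%C.
Proof.
  intros [Hal Hbe] Hzero; pose proof (Cnorm2_pos al Hal) as Hal2; pose proof (xi_mul_kappa_pos xi hxi).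
  destruct al as [a1 a2], be as [b1 b2]; simpl in Hal2.
  unfold Im, Cconj, Cmult in Hbe; simpl in Hbe.
  unfold eigen2, Cmult, Cplus, RtoC in Hzero; simpl in Hzero; injection Hzero; intros Him Hre.
  assert (a1 = - kappa xi * b2) by lra; assert (a2 = kappa xi * b1) by lra; subst a1 a2.
  assert (0 <= b1 ^ 2 + b2 ^ 2) by (pose proof (pow2_ge_0 b1); pose proof (pow2_ge_0 b2); lra).
  assert (xi * kappa xi * (b1 ^ 2 + b2 ^ 2) <= 0) by nra.
  assert (b1 ^ 2 + b2 ^ 2 = 0) by nra.
  nra.
Qed.

Lemma Cmod_eigenvalue : Cmod (Ci * sign xi * gamma xi)%C = gamma xi.
Proof.
  rewrite !Cmod_mult, Cmod_Ci, !Cmod_R, Rabs_sign, (Rabs_pos_eq (gamma xi)) by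
    (auto; pose proof (gamma_ge_1 xi); lra).
  ring.
Qed.

Theorem cauchy_expect_ln_Cmod_lin_form n : forall al be, admissible xi al be ->
  cauchy_expect n (fun es => ln (Cmod (lin_form xi al be (Sprod xi es))))
    (INR n * ln (gamma xi) + ln (Cmod (al + be * eigen2 xi)%C)).
Proof.
  induction n as [|n IH]; intros al be Hadm.
  - simpl; rewrite lin_form_id; ring.
  - apply cauchy_expect_snoc
      with (fun es => ln (Cmod (lin_form xi (be + Ci * xi * al) (- al) (Sprod xi es)))).
    + intros xs; apply (is_RInt_line_ext
        (fun x => ln (Cmod (lin_form xi al be (mat2_mul (Ymat xi x) (Sprod xi xs)))) * cauchy_density x));
        [intros x; rewrite Sprod_snoc; reflexivity|].
      apply is_RInt_line_ln_Cmod_lin_form, det_Sprod; auto.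
    + replace (INR (S n) * ln (gamma xi) + ln (Cmod (al + be * eigen2 xi)))
        with (INR n * ln (gamma xi) + ln (Cmod ((be + Ci * xi * al) + - al * eigen2 xi)%C)).
      { apply IH, admissible_step; auto. }
      pose proof (gamma_ge_1 xi).
      assert (0 < Cmod (al + be * eigen2 xi)) by (apply Cmod_gt_0, admissible_lin_form_id_neq_0; auto).
      rewrite lin_form_eigen, Cmod_mult, Cmod_eigenvalue, ln_mult, S_INR by lra; ring.
Qed.

End LogModulus.

(** * Submultiplicative norms on 2x2 matrices *)

Definition E11 : mat2 := Mat2 1 0 0 0.
Definition E12 : mat2 := Mat2 0 1 0 0.
Definition E21 : mat2 := Mat2 0 0 1 0.
Definition E22 : mat2 := Mat2 0 0 0 1.

Definition mat2_l1 (A : mat2) : R := Rabs (m11 A) + Rabs (m12 A) + Rabs (m21 A) + Rabs (m22 A).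

Lemma mat2_l1_nonneg A : 0 <= mat2_l1 A.
Proof.
  unfold mat2_l1; pose proof (Rabs_pos (m11 A)); pose proof (Rabs_pos (m12 A));
    pose proof (Rabs_pos (m21 A)); pose proof (Rabs_pos (m22 A)); lra.
Qed.

Lemma one_le_mat2_l1_sqr S : det S = 1 -> 1 <= mat2_l1 S * mat2_l1 S.
Proof.
  unfold det, mat2_l1; intros HS; rewrite <- HS.
  pose proof (Rle_abs (m11 S * m22 S - m12 S * m21 S)).
  pose proof (Rabs_triang (m11 S * m22 S) (- (m12 S * m21 S))).
  rewrite Rabs_Ropp, !Rabs_mult in *.
  pose proof (Rabs_pos (m11 S)); pose proof (Rabs_pos (m12 S));
    pose proof (Rabs_pos (m21 S)); pose proof (Rabs_pos (m22 S)).
  unfold Rminus in *; nra.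
Qed.

Section MatrixNorm.

Variable N : mat2 -> R.
Hypothesis hN : is_matrix_norm N.

Lemma norm_nonneg A : 0 <= N A.
Proof. apply hN. Qed.

Lemma norm_scale c A : N (mat2_scale c A) = Rabs c * N A.
Proof. apply hN. Qed.

Lemma norm_add A B : N (mat2_add A B) <= N A + N B.
Proof. apply hN. Qed.

Lemma norm_mul A B : N (mat2_mul A B) <= N A * N B.
Proof. apply hN. Qed.

Lemma norm_pos A : A <> mat2_zero -> 0 < N A.
Proof.
  intros HA; destruct (norm_nonneg A) as [|H0]; auto.
  exfalso; apply HA; destruct hN as [_ [Hdef _]]; auto.
Qed.

Lemma norm_Mat2_pos a b c d : a <> 0 \/ b <> 0 \/ c <> 0 \/ d <> 0 -> 0 < N (Mat2 a b c d).
Proof. intros Hne; apply norm_pos; intros H0; injection H0; intros; lra. Qed.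

Definition norm_upper : R := N E11 + N E12 + N E21 + N E22.

Definition norm_lower : R :=
  N E11 + N E11 * N E22 / N E12 + N E22 * N E11 / N E21 + N E22.

Lemma norm_le_mat2_l1 A : N A <= norm_upper * mat2_l1 A.
Proof.
  assert (E : A = mat2_add (mat2_add (mat2_scale (m11 A) E11) (mat2_scale (m12 A) E12))
                           (mat2_add (mat2_scale (m21 A) E21) (mat2_scale (m22 A) E22)))
    by (apply mat2_eq; destruct A; simpl; ring).
  rewrite E at 1; eapply Rle_trans; [apply norm_add|].
  eapply Rle_trans; [apply Rplus_le_compat; apply norm_add|].
  rewrite !norm_scale; unfold norm_upper, mat2_l1.
  pose proof (norm_nonneg E11); pose proof (norm_nonneg E12);
    pose proof (norm_nonneg E21); pose proof (norm_nonneg E22).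
  pose proof (Rabs_pos (m11 A)); pose proof (Rabs_pos (m12 A));
    pose proof (Rabs_pos (m21 A)); pose proof (Rabs_pos (m22 A)).
  nra.
Qed.

(* Used with [P = E_ii] and [Q = E_jj], for which [P A Q = a_ij E_ij]. *)
Lemma abs_entry_le P A Q c E : mat2_mul (mat2_mul P A) Q = mat2_scale c E -> 0 < N E ->
  Rabs c <= N P * N Q / N E * N A.
Proof.
  intros HPAQ HE.
  assert (Hle : Rabs c * N E <= N P * N A * N Q).
  { rewrite <- norm_scale, <- HPAQ; eapply Rle_trans; [apply norm_mul|].
    apply Rmult_le_compat_r; [apply norm_nonneg | apply norm_mul]. }
  replace (N P * N Q / N E * N A) with (N P * N A * N Q / N E) by (field; lra).
  apply Rle_div_r; auto.
Qed.

Lemma norm_units_pos : 0 < N E11 /\ 0 < N E12 /\ 0 < N E21 /\ 0 < N E22.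
Proof. repeat split; apply norm_Mat2_pos; lra. Qed.

Lemma norm_lower_pos : 0 < norm_lower.
Proof.
  destruct norm_units_pos as (H11 & H12 & H21 & H22); unfold norm_lower.
  assert (0 < N E11 * N E22 / N E12) by (apply Rdiv_lt_0_compat; nra).
  assert (0 < N E22 * N E11 / N E21) by (apply Rdiv_lt_0_compat; nra).
  lra.
Qed.

Lemma mat2_l1_le_norm A : mat2_l1 A <= norm_lower * N A.
Proof.
  destruct norm_units_pos as (H11 & H12 & H21 & H22).
  assert (B11 := abs_entry_le E11 A E11 (m11 A) E11 ltac:(apply mat2_eq; destruct A; simpl; ring) H11).
  assert (B12 := abs_entry_le E11 A E22 (m12 A) E12 ltac:(apply mat2_eq; destruct A; simpl; ring) H12).
  assert (B21 := abs_entry_le E22 A E11 (m21 A) E21 ltac:(apply mat2_eq; destruct A; simpl; ring) H21).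
  assert (B22 := abs_entry_le E22 A E22 (m22 A) E22 ltac:(apply mat2_eq; destruct A; simpl; ring) H22).
  replace (N E11 * N E11 / N E11) with (N E11) in B11 by (field; lra).
  replace (N E22 * N E22 / N E22) with (N E22) in B22 by (field; lra).
  unfold mat2_l1, norm_lower; lra.
Qed.

Lemma inv_norm_lower_le_norm S : det S = 1 -> / norm_lower <= N S.
Proof.
  intros HS; pose proof (one_le_mat2_l1_sqr S HS); pose proof (mat2_l1_le_norm S).
  pose proof (mat2_l1_nonneg S); pose proof norm_lower_pos.
  assert (1 <= norm_lower * N S) by nra.
  rewrite <- Rdiv_1_l; apply Rle_div_l; [lra|]; lra.
Qed.

End MatrixNorm.

(** * Regularity of [ln N(S_n)] in the noise *)

Definition adj (Q : mat2) : mat2 := Mat2 (m22 Q) (- m12 Q) (- m21 Q) (m11 Q).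

Definition Ymat_inv (xi x : R) : mat2 := Mat2 0 1 (-1) (xi * x).

Section LnNorm.

Variable N : mat2 -> R.
Hypothesis hN : is_matrix_norm N.
Variable xi : R.

Lemma norm_det_1_pos S : det S = 1 -> 0 < N S.
Proof.
  intros HS; pose proof (inv_norm_lower_le_norm N hN S HS).
  pose proof (Rinv_0_lt_compat _ (norm_lower_pos N hN)); lra.
Qed.

Lemma norm_Sprod_pos l : 0 < N (Sprod xi l).
Proof. apply norm_det_1_pos, det_Sprod. Qed.

Lemma ln_norm_Sprod_ge l : - ln (norm_lower N) <= ln (N (Sprod xi l)).
Proof.
  pose proof (norm_lower_pos N hN).
  rewrite <- ln_Rinv by lra; apply ln_le; [apply Rinv_0_lt_compat; lra|].
  apply inv_norm_lower_le_norm, det_Sprod; auto.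
Qed.

Definition ln_growth : R := Rabs (ln (norm_upper N * (2 + Rabs xi))) + 2.

Lemma ln_norm_Ymat_le x : ln (N (Ymat xi x)) <= ln_growth * weight x.
Proof.
  pose proof (Rabs_pos xi); pose proof (Rabs_pos x); pose proof (weight_ge_1 x).
  assert (Hu : 0 < norm_upper N)
    by (destruct (norm_units_pos N hN) as (? & ? & ? & ?); unfold norm_upper; lra).
  assert (HY : N (Ymat xi x) <= (norm_upper N * (2 + Rabs xi)) * (1 + Rabs x)).
  { eapply Rle_trans; [apply (norm_le_mat2_l1 N hN)|].
    unfold mat2_l1, Ymat; simpl; rewrite Rabs_mult, Rabs_R0, Rabs_R1, Rabs_m1.
    assert (0 <= norm_upper N * (2 * Rabs x + Rabs xi)) by (apply Rmult_le_pos; lra); nra. }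
  apply Rle_trans with (ln (norm_upper N * (2 + Rabs xi)) + ln (1 + Rabs x)).
  { rewrite <- ln_mult by nra; apply ln_le; auto; apply norm_Mat2_pos; auto; lra. }
  pose proof (ln_1_abs_le_weight x); pose proof (Rle_abs (ln (norm_upper N * (2 + Rabs xi)))).
  assert (0 <= Rabs (ln (norm_upper N * (2 + Rabs xi))) * (weight x - 1))
    by (apply Rmult_le_pos; [apply Rabs_pos | lra]).
  unfold ln_growth; nra.
Qed.

Lemma ln_norm_Sprod_le l : ln (N (Sprod xi l)) <= ln (N mat2_id) + ln_growth * weight_sum l.
Proof.
  induction l as [|x l IH] using rev_ind; [simpl; unfold Sprod; simpl; lra|].
  rewrite Sprod_snoc, weight_sum_app; simpl.
  assert (HY : 0 < N (Ymat xi x)) by (apply norm_det_1_pos, det_Ymat).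
  pose proof (norm_Sprod_pos l).
  apply Rle_trans with (ln (N (Ymat xi x)) + ln (N (Sprod xi l))).
  { rewrite <- ln_mult by auto; apply ln_le;
      [apply norm_det_1_pos; rewrite det_mul, det_Ymat, det_Sprod; ring|].
    apply (norm_mul N hN). }
  pose proof (ln_norm_Ymat_le x); lra.
Qed.

Lemma weight_bounded_ln_norm_Sprod : weight_bounded ln_growth (fun l => ln (N (Sprod xi l))).
Proof.
  exists (Rabs (ln (N mat2_id)) + Rabs (ln (norm_lower N))); intros l.
  pose proof (ln_norm_Sprod_le l); pose proof (ln_norm_Sprod_ge l).
  assert (0 <= ln_growth * weight_sum l)
    by (apply Rmult_le_pos; [unfold ln_growth; pose proof (Rabs_pos (ln (norm_upper N * (2 + Rabs xi)))); lra
                           | apply weight_sum_nonneg]).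
  pose proof (Rle_abs (ln (N mat2_id))); pose proof (Rle_abs (ln (norm_lower N))).
  pose proof (Rabs_pos (ln (N mat2_id))); pose proof (Rabs_pos (ln (norm_lower N))).
  apply Rabs_le_between; split; lra.
Qed.

(* [P Y_x Q = P Y_y Q + xi (x - y) P E11 Q] and [P E11 Q = (P Y_y Q) W], with
   [W = Q^-1 Y_y^-1 E11 Q]; then [ln (1 + u) <= u]. *)
Lemma ln_norm_perturb P Q x y : det P = 1 -> det Q = 1 ->
  ln (N (mat2_mul P (mat2_mul (Ymat xi x) Q))) - ln (N (mat2_mul P (mat2_mul (Ymat xi y) Q)))
  <= Rabs xi * Rabs (x - y) * N (mat2_mul (adj Q) (mat2_mul (Ymat_inv xi y) (mat2_mul E11 Q))).
Proof.
  intros HP HQ.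
  set (W := mat2_mul (adj Q) (mat2_mul (Ymat_inv xi y) (mat2_mul E11 Q))).
  set (S := mat2_mul P (mat2_mul (Ymat xi x) Q)); set (S' := mat2_mul P (mat2_mul (Ymat xi y) Q)).
  assert (HS : 0 < N S) by (apply norm_det_1_pos; unfold S; rewrite !det_mul, HP, HQ, det_Ymat; ring).
  assert (HS' : 0 < N S') by (apply norm_det_1_pos; unfold S'; rewrite !det_mul, HP, HQ, det_Ymat; ring).
  assert (HW : mat2_mul S' W = mat2_mul P (mat2_mul E11 Q)).
  { transitivity (mat2_scale (det Q) (mat2_mul P (mat2_mul E11 Q))).
    - unfold S', W; apply mat2_eq; destruct P, Q; unfold det; simpl; ring.
    - rewrite HQ; apply mat2_eq; simpl; ring. }
  assert (HSW : S = mat2_add S' (mat2_scale (xi * (x - y)) (mat2_mul P (mat2_mul E11 Q))))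
    by (unfold S, S'; apply mat2_eq; destruct P, Q; simpl; ring).
  assert (Hle : N S <= N S' * (1 + Rabs xi * Rabs (x - y) * N W)).
  { rewrite HSW, <- HW; eapply Rle_trans; [apply (norm_add N hN)|]; rewrite (norm_scale N hN), Rabs_mult.
    pose proof (norm_mul N hN S' W); pose proof (Rabs_pos xi); pose proof (Rabs_pos (x - y)).
    assert (0 <= Rabs xi * Rabs (x - y)) by (apply Rmult_le_pos; lra); nra. }
  rewrite <- ln_div by auto.
  eapply Rle_trans; [apply ln_le_sub_1, Rdiv_lt_0_compat; auto|].
  assert (N S / N S' <= 1 + Rabs xi * Rabs (x - y) * N W) by (apply Rle_div_l; lra).
  lra.
Qed.

Lemma norm_perturb_factor_le Q x y : Rabs (y - x) < 1 ->
  N (mat2_mul (adj Q) (mat2_mul (Ymat_inv xi y) (mat2_mul E11 Q)))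
  <= N (adj Q) * (norm_upper N * (2 + Rabs xi * (Rabs x + 1))) * N (mat2_mul E11 Q).
Proof.
  intros Hyx; pose proof (norm_nonneg N hN (adj Q)); pose proof (norm_nonneg N hN (mat2_mul E11 Q)).
  eapply Rle_trans; [apply (norm_mul N hN)|]; rewrite Rmult_assoc.
  apply Rmult_le_compat_l; auto.
  eapply Rle_trans; [apply (norm_mul N hN)|]; apply Rmult_le_compat_r; auto.
  eapply Rle_trans; [apply (norm_le_mat2_l1 N hN)|].
  assert (Hu : 0 < norm_upper N)
    by (destruct (norm_units_pos N hN) as (? & ? & ? & ?); unfold norm_upper; lra).
  unfold mat2_l1, Ymat_inv; simpl; rewrite Rabs_R0, Rabs_R1, Rabs_m1, Rabs_mult.
  apply Rmult_le_compat_l; [lra|].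
  assert (Rabs y <= Rabs x + 1)
    by (pose proof (Rabs_triang (y - x) x); replace (y - x + x) with y in * by ring; lra).
  pose proof (Rabs_pos xi); nra.
Qed.

Lemma coord_equicontinuous_ln_norm_Sprod : coord_equicontinuous (fun l => ln (N (Sprod xi l))).
Proof.
  intros pre x eps Heps; cbv beta.
  set (Q := Sprod xi pre).
  set (Cw := N (adj Q) * (norm_upper N * (2 + Rabs xi * (Rabs x + 1))) * N (mat2_mul E11 Q)).
  assert (HCw : forall y, Rabs (y - x) < 1 ->
             N (mat2_mul (adj Q) (mat2_mul (Ymat_inv xi y) (mat2_mul E11 Q))) <= Cw)
    by (intros; apply norm_perturb_factor_le; auto).
  set (K := Rabs xi * Cw + 1).
  assert (HK : 1 <= K).
  { assert (0 <= Cw) by (specialize (HCw x ltac:(rewrite Rminus_diag, Rabs_R0; lra));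
                         eapply Rle_trans; [apply (norm_nonneg N hN) | apply HCw]).
    unfold K; pose proof (Rabs_pos xi); nra. }
  exists (Rmin 1 (eps / K)); split; [apply Rmin_pos; [lra | apply Rdiv_lt_0_compat; lra]|].
  intros y rest Hxy.
  pose proof (Rmin_l 1 (eps / K)); pose proof (Rmin_r 1 (eps / K)).
  assert (Hb : Rabs xi * Rabs (x - y) * Cw <= eps).
  { pose proof (Rabs_pos xi); pose proof (Rabs_pos (x - y)).
    apply Rle_trans with (Rabs (x - y) * K); [unfold K; nra|].
    apply Rle_div_r; lra. }
  rewrite !Sprod_app_cons; fold Q.
  pose proof (det_Sprod xi rest) as HP; pose proof (det_Sprod xi pre) as HQ; fold Q in HQ.
  pose proof (ln_norm_perturb _ _ x y HP HQ) as L1; pose proof (ln_norm_perturb _ _ y x HP HQ) as L2.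
  rewrite (Rabs_minus_sym y x) in L2.
  pose proof (HCw y ltac:(rewrite Rabs_minus_sym; lra)).
  pose proof (HCw x ltac:(rewrite Rminus_diag, Rabs_R0; lra)).
  pose proof (Rabs_pos xi); pose proof (Rabs_pos (x - y)).
  assert (0 <= Rabs xi * Rabs (x - y)) by (apply Rmult_le_pos; lra).
  apply Rabs_le_between; split; nra.
Qed.

Lemma ex_cauchy_expect_ln_norm_Sprod n : exists L, cauchy_expect n (fun es => ln (N (Sprod xi es))) L.
Proof.
  apply (cauchy_expect_exists n _ ln_growth);
    [apply weight_bounded_ln_norm_Sprod | apply coord_equicontinuous_ln_norm_Sprod].
Qed.

End LnNorm.

(** * Comparison of [ln N(S)] with the log-modulus of a linear form *)

Lemma Cmod_sqr (z : C) : Cmod z ^ 2 = fst z ^ 2 + snd z ^ 2.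
Proof.
  unfold Cmod; rewrite pow2_sqrt; auto.
  pose proof (pow2_ge_0 (fst z)); pose proof (pow2_ge_0 (snd z)); lra.
Qed.

Lemma mat2_l1_sqr_le A : mat2_l1 A ^ 2 <= 4 * (m11 A ^ 2 + m12 A ^ 2 + m21 A ^ 2 + m22 A ^ 2).
Proof.
  unfold mat2_l1; destruct A as [a b c d]; cbn [m11 m12 m21 m22].
  rewrite <- (pow2_abs a), <- (pow2_abs b), <- (pow2_abs c), <- (pow2_abs d).
  set (a' := Rabs a); set (b' := Rabs b); set (c' := Rabs c); set (d' := Rabs d).
  pose proof (pow2_ge_0 (a' - b')); pose proof (pow2_ge_0 (a' - c')); pose proof (pow2_ge_0 (a' - d'));
    pose proof (pow2_ge_0 (b' - c')); pose proof (pow2_ge_0 (b' - d')); pose proof (pow2_ge_0 (c' - d')).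
  nra.
Qed.

(* Every admissible pair bounds [E ln N(S_n)] from below; the pair [(1, i sign xi)]
   also bounds it from above, because [|probe xi S|^2 >= kappa^2 |S|_2^2]
   whenever [det S = 1]. *)
Definition probe (xi : R) (S : mat2) : C := lin_form xi 1 (Ci * sign xi) S.

Section Probe.

Variable xi : R.
Hypothesis hxi : xi <> 0.

Lemma admissible_probe : admissible xi 1 (Ci * sign xi).
Proof.
  split; [intros H0; injection H0; lra|].
  unfold Im, Cconj, Cmult, Ci, RtoC; simpl.
  replace (xi * ((0 * sign xi - 1 * 0) * - 0 + (0 * 0 + 1 * sign xi) * 1)) with (sign xi * xi) by ring.
  rewrite <- (sign_mul_Rabs xi hxi) at 2; rewrite <- Rmult_assoc, sign_sqr by auto.
  pose proof (Rabs_pos xi); lra.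
Qed.

Lemma lin_form_probe S : probe xi S =
  (m11 S + sign xi * kappa xi * m22 S, sign xi * m21 S - kappa xi * m12 S).
Proof. unfold probe, lin_form, eigen2, Cmult, Cplus, Ci, RtoC; simpl; f_equal; ring. Qed.

Lemma Cmod_probe_sqr_ge S : det S = 1 ->
  kappa xi ^ 2 * (m11 S ^ 2 + m12 S ^ 2 + m21 S ^ 2 + m22 S ^ 2)
  <= Cmod (probe xi S) ^ 2.
Proof.
  intros HS; rewrite Cmod_sqr, lin_form_probe; simpl fst; simpl snd.
  pose proof (sign_sqr xi hxi) as Hs2; pose proof (sign_mul_kappa xi hxi) as Hsk.
  pose proof (kappa_sqr_le_1 xi hxi); pose proof (gamma_ge_1 xi).
  replace ((m11 S + sign xi * kappa xi * m22 S) ^ 2 + (sign xi * m21 S - kappa xi * m12 S) ^ 2)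
    with (m11 S ^ 2 + kappa xi ^ 2 * m12 S ^ 2 + (sign xi * sign xi) * (m21 S ^ 2 + kappa xi ^ 2 * m22 S ^ 2)
          + 2 * (sign xi * kappa xi) * det S) by (unfold det; ring).
  rewrite Hs2, Hsk, HS.
  assert (0 < / gamma xi) by (apply Rinv_0_lt_compat; lra).
  pose proof (pow2_ge_0 (m11 S)); pose proof (pow2_ge_0 (m21 S)).
  assert (kappa xi ^ 2 * m11 S ^ 2 <= m11 S ^ 2) by nra.
  assert (kappa xi ^ 2 * m21 S ^ 2 <= m21 S ^ 2) by nra.
  nra.
Qed.

Lemma Cmod_probe_le_mat2_l1 S : Cmod (probe xi S) <= mat2_l1 S.
Proof.
  apply Rsqr_incr_0_var; [| apply mat2_l1_nonneg]; unfold Rsqr.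
  replace (Cmod (probe xi S) * Cmod (probe xi S))
    with (Cmod (probe xi S) ^ 2) by ring.
  rewrite Cmod_sqr, lin_form_probe; simpl fst; simpl snd.
  assert (Hk : Rabs (kappa xi) <= 1)
    by (pose proof (kappa_sqr_le_1 xi hxi); rewrite <- (pow2_abs (kappa xi)) in *;
        pose proof (Rabs_pos (kappa xi)); nra).
  assert (Hsk : Rabs (sign xi * kappa xi) <= 1) by (rewrite Rabs_mult, Rabs_sign; lra).
  assert (H1 : Rabs (m11 S + sign xi * kappa xi * m22 S) <= Rabs (m11 S) + Rabs (m22 S)).
  { eapply Rle_trans; [apply Rabs_triang|]; rewrite Rabs_mult.
    pose proof (Rabs_pos (m22 S)); pose proof (Rabs_pos (sign xi * kappa xi)); nra. }
  assert (H2 : Rabs (sign xi * m21 S - kappa xi * m12 S) <= Rabs (m21 S) + Rabs (m12 S)).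
  { unfold Rminus; eapply Rle_trans; [apply Rabs_triang|]; rewrite Rabs_Ropp, !Rabs_mult, Rabs_sign by auto.
    pose proof (Rabs_pos (m12 S)); pose proof (Rabs_pos (kappa xi)); nra. }
  rewrite <- (pow2_abs (m11 S + _)), <- (pow2_abs (sign xi * m21 S - _)).
  pose proof (Rabs_pos (m11 S + sign xi * kappa xi * m22 S));
    pose proof (Rabs_pos (sign xi * m21 S - kappa xi * m12 S)).
  pose proof (Rabs_pos (m11 S)); pose proof (Rabs_pos (m12 S));
    pose proof (Rabs_pos (m21 S)); pose proof (Rabs_pos (m22 S)).
  unfold mat2_l1; nra.
Qed.

Lemma mat2_l1_le_Cmod_probe S : det S = 1 ->
  Rabs (kappa xi) * mat2_l1 S <= 2 * Cmod (probe xi S).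
Proof.
  intros HS; apply Rsqr_incr_0_var.
  - unfold Rsqr; pose proof (Cmod_probe_sqr_ge S HS); pose proof (mat2_l1_sqr_le S).
    rewrite <- (pow2_abs (kappa xi)) in *.
    pose proof (pow2_ge_0 (Rabs (kappa xi))); nra.
  - pose proof (Cmod_ge_0 (probe xi S)); lra.
Qed.

Section Norm.

Variable N : mat2 -> R.
Hypothesis hN : is_matrix_norm N.

Definition probe_gap : R := Rabs (ln (norm_lower N)) + Rabs (ln (2 * norm_upper N / Rabs (kappa xi))).

Lemma ln_norm_sub_ln_Cmod_probe_le S : det S = 1 ->
  Rabs (ln (N S) - ln (Cmod (probe xi S))) <= probe_gap.
Proof.
  intros HS; set (z := Cmod (probe xi S)).
  assert (Hk : 0 < Rabs (kappa xi)).
  { apply Rabs_pos_lt; unfold kappa; pose proof (gamma_ge_1 xi).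
    apply Rmult_integral_contrapositive_currified; [|apply Rinv_neq_0_compat; lra].
    pose proof (Rabs_sign xi hxi); intros Hs0; rewrite Hs0, Rabs_R0 in *; lra. }
  pose proof (norm_lower_pos N hN) as Hl; pose proof (norm_det_1_pos N hN S HS) as HN.
  assert (Hu : 0 < norm_upper N)
    by (destruct (norm_units_pos N hN) as (? & ? & ? & ?); unfold norm_upper; lra).
  pose proof (one_le_mat2_l1_sqr S HS); pose proof (mat2_l1_nonneg S).
  assert (Hl1 : 1 <= mat2_l1 S) by nra.
  pose proof (mat2_l1_le_Cmod_probe S HS) as Hz; fold z in Hz.
  assert (Hzpos : 0 < z) by nra.
  assert (Hlow : ln z <= ln (norm_lower N) + ln (N S)).
  { rewrite <- ln_mult by auto; apply ln_le; auto.
    eapply Rle_trans; [apply Cmod_probe_le_mat2_l1 | apply (mat2_l1_le_norm N hN)]. }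
  assert (Hup : ln (N S) <= ln (2 * norm_upper N / Rabs (kappa xi)) + ln z).
  { rewrite <- ln_mult by (try apply Rdiv_lt_0_compat; lra); apply ln_le; auto.
    eapply Rle_trans; [apply (norm_le_mat2_l1 N hN)|].
    assert (Hl1z : mat2_l1 S <= 2 * z / Rabs (kappa xi))
      by (apply Rle_div_r; [lra | rewrite Rmult_comm; lra]).
    replace (2 * norm_upper N / Rabs (kappa xi) * z) with (norm_upper N * (2 * z / Rabs (kappa xi)))
      by (field; lra).
    apply Rmult_le_compat_l; lra. }
  unfold probe_gap; pose proof (Rle_abs (ln (norm_lower N))); pose proof (Rabs_pos (ln (norm_lower N))).
  pose proof (Rle_abs (ln (2 * norm_upper N / Rabs (kappa xi)))).
  pose proof (Rabs_pos (ln (2 * norm_upper N / Rabs (kappa xi)))).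
  apply Rabs_le_between; split; lra.
Qed.

Lemma cauchy_expect_ln_norm_Sprod_near n L :
  cauchy_expect n (fun es => ln (N (Sprod xi es))) L ->
  Rabs (L - (INR n * ln (gamma xi) + ln (Cmod (1 + Ci * sign xi * eigen2 xi)%C))) <= probe_gap.
Proof.
  intros HL.
  assert (Hprobe := cauchy_expect_ln_Cmod_lin_form xi hxi n _ _ (admissible_probe)).
  assert (Hgap : forall es,
            - probe_gap <= ln (N (Sprod xi es)) - ln (Cmod (probe xi (Sprod xi es))) <= probe_gap)
    by (intros es; apply Rabs_le_between, ln_norm_sub_ln_Cmod_probe_le, det_Sprod).
  unfold probe in Hgap.
  pose proof (cauchy_expect_le n _ _ _ _ probe_gap HL Hprobe (fun es => ltac:(specialize (Hgap es); lra))).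
  pose proof (cauchy_expect_le n _ _ _ _ probe_gap Hprobe HL (fun es => ltac:(specialize (Hgap es); lra))).
  apply Rabs_le_between; lra.
Qed.

End Norm.

End Probe.

Lemma Un_cv_div_INR (E : nat -> R) c c0 C :
  (forall n, Rabs (E n - (INR n * c + c0)) <= C) -> Un_cv (fun n => E n / INR n) c.
Proof.
  intros HE eps Heps.
  set (K := C + Rabs c0).
  assert (HK : 0 <= K) by (specialize (HE O); pose proof (Rabs_pos (E O - (INR O * c + c0)));
                           pose proof (Rabs_pos c0); unfold K; lra).
  destruct (archimed (K / eps)) as [Harch _].
  exists (S (Z.to_nat (up (K / eps)))); intros n Hn.
  assert (HnR : 0 < INR n) by (apply lt_0_INR; lia).
  assert (HnK : K / eps < INR n).
  { apply Rlt_le_trans with (IZR (up (K / eps))); auto.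
    assert (0 <= K / eps) by (apply Rdiv_le_0_compat; lra).
    assert (0 <= up (K / eps))%Z by (apply le_IZR; lra).
    rewrite <- (Z2Nat.id (up (K / eps))) by auto; rewrite <- INR_IZR_INZ; apply le_INR; lia. }
  unfold R_dist.
  replace (E n / INR n - c) with ((E n - (INR n * c + c0) + c0) / INR n) by (field; lra).
  rewrite Rabs_div, (Rabs_pos_eq (INR n)) by lra.
  apply Rlt_div_l; [lra|].
  eapply Rle_lt_trans; [apply Rabs_triang|].
  specialize (HE n); fold K.
  apply Rlt_div_l in HnK; [|lra]; unfold K in *; lra.
Qed.

Theorem proposition4p1 (xi : R) (hxi : xi <> 0) (N : mat2 -> R)
  (hN : is_matrix_norm N) :
  exists E : nat -> R,
    (forall n, cauchy_expect n (fun es => ln (N (Sprod xi es))) (E n)) /\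
    Un_cv (fun n => E n / INR n) (ln ((Rabs xi + sqrt (xi ^ 2 + 4)) / 2)).
Proof.
  set (E := fun n => epsilon (inhabits 0) (cauchy_expect n (fun es => ln (N (Sprod xi es))))).
  assert (HE : forall n, cauchy_expect n (fun es => ln (N (Sprod xi es))) (E n))
    by (intros n; apply epsilon_spec, ex_cauchy_expect_ln_norm_Sprod; auto).
  exists E; split; auto.
  eapply (Un_cv_div_INR E _ _ (probe_gap xi N)); intros n.
  apply cauchy_expect_ln_norm_Sprod_near; auto.
Qed.
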